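(* Suppose $\sigma^2>0=\lambda(\mathbb R)$ (so $\psi(\beta)=\tfrac12\sigma^2\beta^2+\mu\beta$ and $\psi^h(\beta)=\mu\frac{e^{\beta h}-e^{-\beta h}}{2h}+\sigma^2\frac{e^{\beta h}+e^{-\beta h}-2}{2h^2}$), and let $q\ge0$. If $q=\mu=0$, then $\Delta^{(q)}_W(x,h)=0$ for all $h\in(0,h_\star)$ and $x\in\mathbb Z_h^{++}$. If $q\vee|\mu|>0$, then: (i) there exist $A_0,h_0\in(0,\infty)$ such that for all $h\in(0,h_0)$ and all $x\in\mathbb Z_h^{++}$ with $xh^2\le1$: $|\Delta^{(q)}_W(x,h)|\le A_0h^2(1+x)e^{\alpha_+x}$; (ii) for any nested sequence $h_n\downarrow0$ (i.e. $h_n/h_{n+1}\in\mathbb N$) and any $x\in\bigcup_n\mathbb Z_{h_n}^{++}$, $$\lim_{n\to\infty}\frac{\Delta^{(q)}_W(x,h_n)}{h_n^2}=\frac{q^2}{2(\mu^2+2\sigma^2q)}W^{(q)}(x)+\frac{x}{\sqrt{\mu^2+2\sigma^2q}}\bigl(e^{\alpha_+x}\theta_+-e^{\alpha_-x}\theta_-\bigr)$$ (for $q=0$ this limit equals $-\frac23\frac{\mu^2x}{(\sigma^2)^3}e^{-2\mu x/\sigma^2}$), where $\alpha_\pm=\frac{-\mu\pm\sqrt{\mu^2+2q\sigma^2}}{\sigma^2}$ and $\theta_\pm=\frac{\mu^3\sqrt{2q\sigma^2+\mu^2}\pm(\frac12q^2(\sigma^2)^2-\mu^4-\mu^2\sig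ma^2q)}{3(\sigma^2)^3\sqrt{2q\sigma^2+\mu^2}}$.
   Context: $X$ is the Lévy process $\sigma B_t+\mu t$ ($B$ standard Brownian motion, $\sigma^2>0$). For $h>0$, $\mathbb Z_h=h\mathbb Z$, $\mathbb Z_h^{++}=\mathbb Z_h\cap(0,\infty)$; $h_\star>0$ is such that for $h\in(0,h_\star)$ the function $\psi^h$ above is the Laplace exponent of a compound Poisson process on $\mathbb Z_h$. For $q\ge0$: $\Phi(q)$, $\Phi^h(q)$ are the largest roots of $\psi=q$, $\psi^h=q$ on $[0,\infty)$; $W^{(q)}$ vanishes on $(-\infty,0)$ and is the continuous nondecreasing function on $[0,\infty)$ with Laplace transform $1/(\psi(\beta)-q)$ for $\beta>\Phi(q)$ (explicitly $W^{(q)}(x)=(e^{\alpha_+x}-e^{\alpha_-x})/\sqrt{\mu^2+2\sigma^2q}$ when $q\vee|\mu|>0$); $W^{(q)}_h$ vanishes on $(-\infty,0)$ and on $[0,\infty)$ is the unique right-continuous function constant on each $[kh,(k+1)h)$, of exponential order, with Laplace transform $\frac{e^{\beta h}-1}{\beta h(\psi^h(\beta)-q)}$ for $\beta>\Phi^h(q)$. $\Delta^{(q)}_W(x,h):=W^{(q)}(x)-W^{(q)}_h(x-h)$. *)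

From Stdlib Require Import Reals Lra.
Open Scope R_scope.

Definition psi (sigma2 mu b : R) : R := / 2 * sigma2 * b ^ 2 + mu * b.

Definition psih (sigma2 mu h b : R) : R :=
  mu * (exp (b * h) - exp (- (b * h))) / (2 * h)
  + sigma2 * (exp (b * h) + exp (- (b * h)) - 2) / (2 * h ^ 2).

(* h_star : for h in (0,hstar), psih is the Laplace exponent of a compound
   Poisson process on Z_h, i.e. psih b = lp (e^{bh}-1) + lm (e^{-bh}-1) with
   nonnegative jump intensities lp = sigma2/(2h^2)+mu/(2h), lm = sigma2/(2h^2)-mu/(2h). *)
Definition hstar_ok (sigma2 mu hstar : R) : Prop :=
  forall h, 0 < h < hstar ->
    0 <= sigma2 / (2 * h ^ 2) + mu / (2 * h) /\
    0 <= sigma2 / (2 * h ^ 2) - mu / (2 * h).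

Definition Zhpp (h x : R) : Prop := exists k : nat, (1 <= k)%nat /\ x = INR k * h.

Definition disc (sigma2 mu q : R) : R := sqrt (mu ^ 2 + 2 * sigma2 * q).
Definition alpha_p (sigma2 mu q : R) : R := (- mu + disc sigma2 mu q) / sigma2.
Definition alpha_m (sigma2 mu q : R) : R := (- mu - disc sigma2 mu q) / sigma2.

(* For
   q \/ |mu| > 0 it is the explicit formula of the context; for q = mu = 0
   (psi b = sigma2 b^2 / 2) it is 2x/sigma2, whose Laplace transform is 1/psi. *)
Definition W (sigma2 mu q x : R) : R :=
  if Rlt_dec x 0 then 0 else
  if Rlt_dec 0 (Rmax q (Rabs mu)) then
    (exp (alpha_p sigma2 mu q * x) - exp (alpha_m sigma2 mu q * x)) / disc sigma2 mu q
  else 2 * x / sigma2.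

Definition laplace_is (f : R -> R) (b L : R) : Prop :=
  (forall T, 0 <= T -> inhabited (Riemann_integrable (fun x => exp (- (b * x)) * f x) 0 T)) /\
  (forall eps, 0 < eps -> exists M, forall T
      (pr : Riemann_integrable (fun x => exp (- (b * x)) * f x) 0 T),
      M <= T -> Rabs (RiemannInt pr - L) < eps).

(* beta > Phi^h(q), where Phi^h(q) is the largest root of psih = q on [0,oo). *)
Definition above_Phih (sigma2 mu h q b : R) : Prop :=
  0 < b /\ forall r, 0 <= r -> psih sigma2 mu h r = q -> r < b.

Definition is_Wh (sigma2 mu q h : R) (Wh : R -> R) : Prop :=
  (forall x, x < 0 -> Wh x = 0) /\
  (exists w : nat -> R, forall (k : nat) x,
      INR k * h <= x < (INR k + 1) * h -> Wh x = w k) /\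
  (exists C c, forall x, 0 <= x -> Rabs (Wh x) <= C * exp (c * x)) /\
  (forall b, above_Phih sigma2 mu h q b ->
      laplace_is Wh b ((exp (b * h) - 1) / (b * h * (psih sigma2 mu h b - q)))).

Definition DeltaW (sigma2 mu q : R) (Wh : R -> R) (x h : R) : R :=
  W sigma2 mu q x - Wh (x - h).

Definition theta_p (sigma2 mu q : R) : R :=
  (mu ^ 3 * disc sigma2 mu q
   + (/ 2 * q ^ 2 * sigma2 ^ 2 - mu ^ 4 - mu ^ 2 * sigma2 * q))
  / (3 * sigma2 ^ 3 * disc sigma2 mu q).
Definition theta_m (sigma2 mu q : R) : R :=
  (mu ^ 3 * disc sigma2 mu q
   - (/ 2 * q ^ 2 * sigma2 ^ 2 - mu ^ 4 - mu ^ 2 * sigma2 * q))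
  / (3 * sigma2 ^ 3 * disc sigma2 mu q).

Definition delta_limit (sigma2 mu q x : R) : R :=
  q ^ 2 / (2 * (mu ^ 2 + 2 * sigma2 * q)) * W sigma2 mu q x
  + x / disc sigma2 mu q *
    (exp (alpha_p sigma2 mu q * x) * theta_p sigma2 mu q
     - exp (alpha_m sigma2 mu q * x) * theta_m sigma2 mu q).

From Pilot Require Import Defs.
From Stdlib Require Import Reals Lra Lia FunctionalExtensionality.
From Coquelicot Require Import Coquelicot.
(* Coquelicot's [disc] (a ball) would shadow the [disc] of [Defs]. *)
Import Defs.
Open Scope R_scope.

(** [X] is Brownian motion with drift ([sigma2 > 0], drift [mu]) and [W_h] the
    scale function of its approximation by a walk on [hZ] with up/down jump
    intensities [lam_p], [lam_m] (killed at rate [q], total rate [lam_tot]).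

    Laplace-inverting the defining transform of [W_h] shows that
    its grid values [w_k] have the generating function
    [sum_k w_k z^k = 1 / (h gen_denom z)] for all small [z > 0], where
    [gen_denom z = lam_p - lam_tot z + lam_m z^2]; by the identity theorem for
    power series ([series_zero]) the [w_k] are the unique solution of the
    associated three-term recursion ([solves_recursion]).  For [q = mu = 0] that
    solution is linear and equals [W]; otherwise it is
    [(r1^(k+1) - r2^(k+1)) / E_h], with [r1], [r2] the roots of [char_poly], so
    that [W(x) - W_h(x - h)] is the explicit function [Gf x h], in which the
    roots [Phi_i = ln r_i / h] of [psih = q] replace [alpha_p], [alpha_m].

    The Taylor expansion [psih = psi + h^2 psi_corr + O(h^3)]
    gives [Phi1 = alpha_p - theta_p h^2 + o(h^2)] and
    [Phi2 = alpha_m - theta_m h^2 + o(h^2)] ([root_expansion]), and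
    [E_h = disc + O(h^2)]; splitting [Gf] into three [O(h^2)] terms yields the
    uniform bound (i) and the limit (ii). *)

(** ** Taylor remainder of the exponential *)

Fixpoint exp_taylor_poly (n : nat) (t : R) : R :=
  match n with
  | 0%nat => 0
  | S m => exp_taylor_poly m t + t ^ m / INR (Factorial.fact m)
  end.

Lemma exp_taylor_poly_deriv (n : nat) (t : R) :
  derivable_pt_lim (exp_taylor_poly (S n)) t (exp_taylor_poly n t).
Proof.
  revert t; induction n as [|n IHn]; intros t.
  - replace (exp_taylor_poly 1) with (fct_cte 1)
      by (apply functional_extensionality; intros; unfold fct_cte; simpl; field).
    apply derivable_pt_lim_const.
  - change (derivable_pt_lim
              (fun s => exp_taylor_poly (S n) s + s ^ S n / INR (Factorial.fact (S n))) t
              (exp_taylor_poly n t + t ^ n / INR (Factorial.fact n))).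
    apply (derivable_pt_lim_plus _ (fun s => s ^ S n / INR (Factorial.fact (S n))));
      [apply IHn|].
    replace (fun s => s ^ S n / INR (Factorial.fact (S n)))
      with (mult_real_fct (/ INR (Factorial.fact (S n))) (fun s => s ^ S n))
      by (apply functional_extensionality; intros; unfold mult_real_fct, Rdiv; ring).
    replace (t ^ n / INR (Factorial.fact n))
      with (/ INR (Factorial.fact (S n)) * (INR (S n) * t ^ Init.Nat.pred (S n))).
    + apply derivable_pt_lim_scal, derivable_pt_lim_pow.
    + simpl Init.Nat.pred. change (Factorial.fact (S n)) with (S n * Factorial.fact n)%nat.
      rewrite mult_INR. field.
      split; [apply not_0_INR, Factorial.fact_neq_0 | apply not_0_INR; lia].
Qed.

Lemma exp_taylor_poly_at_0 (n : nat) : exp_taylor_poly (S n) 0 = 1.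
Proof.
  induction n as [|n IHn]; simpl in *; [field|]. rewrite IHn. lra.
Qed.

Lemma exp_le_mono (x y : R) : x <= y -> exp x <= exp y.
Proof. intros [H|H]; [left; apply exp_increasing, H | rewrite H; lra]. Qed.

Lemma exp_taylor (n : nat) (t : R) :
  Rabs (exp t - exp_taylor_poly n t) <= Rabs t ^ n * exp (Rabs t).
Proof.
  revert t; induction n as [|n IHn]; intros t.
  - simpl. rewrite Rminus_0_r, Rabs_pos_eq, Rmult_1_l by (left; apply exp_pos).
    apply exp_le_mono, Rle_abs.
  - set (f := fun s => exp s - exp_taylor_poly (S n) s).
    assert (Hderiv : forall c, derivable_pt_lim f c (exp c - exp_taylor_poly n c))
      by (intros c; apply derivable_pt_lim_minus;
          [apply derivable_pt_lim_exp | apply exp_taylor_poly_deriv]).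
    assert (Hf0 : f 0 = 0) by (unfold f; rewrite exp_taylor_poly_at_0, exp_0; ring).
    assert (Hslope : forall c, Rabs c <= Rabs t ->
              Rabs (exp c - exp_taylor_poly n c) <= Rabs t ^ n * exp (Rabs t)).
    { intros c Hc. eapply Rle_trans; [apply IHn|].
      apply Rmult_le_compat; try apply pow_le; try apply Rabs_pos;
        [left; apply exp_pos | apply pow_incr; split; [apply Rabs_pos | exact Hc]
        | apply exp_le_mono; exact Hc]. }
    change (Rabs (f t) <= Rabs t ^ S n * exp (Rabs t)).
    assert (Hmvt : exists c, Rabs c <= Rabs t /\
              f t = (exp c - exp_taylor_poly n c) * t).
    { destruct (Rtotal_order t 0) as [Ht|[Ht|Ht]].
      - destruct (MVT_cor2 f _ t 0 Ht (fun c _ => Hderiv c)) as [c [Hc1 Hc2]].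
        exists c; split; [rewrite !Rabs_left by lra; lra | lra].
      - exists 0; subst t; rewrite Hf0; split; [lra | ring].
      - destruct (MVT_cor2 f _ 0 t Ht (fun c _ => Hderiv c)) as [c [Hc1 Hc2]].
        exists c; split; [rewrite !Rabs_right by lra; lra | lra]. }
    destruct Hmvt as [c [Hc ->]].
    rewrite Rabs_mult.
    replace (Rabs t ^ S n * exp (Rabs t)) with (Rabs t ^ n * exp (Rabs t) * Rabs t)
      by (simpl; ring).
    apply Rmult_le_compat_r; [apply Rabs_pos | apply Hslope, Hc].
Qed.

Lemma exp_taylor1 (t : R) : Rabs (exp t - 1) <= Rabs t * exp (Rabs t).
Proof.
  pose proof (exp_taylor 1 t) as H. simpl in H.
  replace (0 + 1 / 1) with 1 in H by field. lra.
Qed.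

Lemma exp_taylor2 (t : R) : Rabs (exp t - 1 - t) <= t ^ 2 * exp (Rabs t).
Proof.
  pose proof (exp_taylor 2 t) as H. simpl in H.
  replace (exp t - (0 + 1 / 1 + t * 1 / 1)) with (exp t - 1 - t) in H by field.
  rewrite <- (pow2_abs t). simpl. lra.
Qed.

Lemma exp_taylor5 (t : R) :
  Rabs (exp t - (1 + t + t ^ 2 / 2 + t ^ 3 / 6 + t ^ 4 / 24)) <= Rabs t ^ 5 * exp (Rabs t).
Proof.
  replace (1 + t + t ^ 2 / 2 + t ^ 3 / 6 + t ^ 4 / 24) with (exp_taylor_poly 5 t)
    by (simpl; field).
  apply exp_taylor.
Qed.

(** ** One-sided limits at [0+]

    All asymptotics in the mesh [h] are limits [limit1_in f Rpos l 0], i.e. as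
    [h -> 0] through positive values; we work with the explicit epsilon-delta
    form given by [lim_intro] and [lim_elim]. *)

Definition Rpos (h : R) : Prop := 0 < h.

Lemma lim_intro (f : R -> R) (l : R) :
  (forall eps, 0 < eps -> exists del, 0 < del /\
     forall h, 0 < h < del -> Rabs (f h - l) < eps) ->
  limit1_in f Rpos l 0.
Proof.
  intros H eps Heps. destruct (H eps Heps) as [del [Hd Hh]].
  exists del; split; [exact Hd|]. intros x [Hx1 Hx2].
  unfold Rpos in Hx1. simpl in *. unfold R_dist in *.
  apply Hh. rewrite Rminus_0_r, Rabs_pos_eq in Hx2 by lra. lra.
Qed.

Lemma lim_elim (f : R -> R) (l : R) : limit1_in f Rpos l 0 ->
  forall eps, 0 < eps -> exists del, 0 < del /\
    forall h, 0 < h < del -> Rabs (f h - l) < eps.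
Proof.
  intros H eps Heps. destruct (H eps Heps) as [del [Hd Hh]].
  exists del; split; [exact Hd|]. intros h Hh'.
  apply (Hh h). split; [unfold Rpos; lra|]. simpl. unfold R_dist.
  rewrite Rminus_0_r, Rabs_pos_eq by lra. lra.
Qed.

Lemma lim_const (c : R) : limit1_in (fun _ => c) Rpos c 0.
Proof.
  apply lim_intro. intros eps He. exists 1. split; [lra|].
  intros. rewrite Rminus_eq_0, Rabs_R0. lra.
Qed.

Lemma lim_id : limit1_in (fun h => h) Rpos 0 0.
Proof.
  apply lim_intro. intros eps He. exists eps. split; [lra|].
  intros. rewrite Rminus_0_r, Rabs_pos_eq; lra.
Qed.

Lemma lim_eq (f : R -> R) (l l' : R) : limit1_in f Rpos l 0 -> l = l' -> limit1_in f Rpos l' 0.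
Proof. intros H <-. exact H. Qed.

Lemma lim_ext_near (f g : R -> R) (l : R) :
  (exists del, 0 < del /\ forall h, 0 < h < del -> f h = g h) ->
  limit1_in g Rpos l 0 -> limit1_in f Rpos l 0.
Proof.
  intros [d0 [Hd0 Hfg]] Hg. apply lim_intro. intros eps He.
  destruct (lim_elim g l Hg eps He) as [d1 [Hd1 H1]].
  exists (Rmin d0 d1). split; [apply Rmin_pos; lra|].
  intros h Hh. pose proof (Rmin_l d0 d1); pose proof (Rmin_r d0 d1).
  rewrite Hfg by lra. apply H1; lra.
Qed.

Lemma lim_squeeze (f g : R -> R) (l : R) :
  (exists del, 0 < del /\ forall h, 0 < h < del -> Rabs (f h - l) <= g h) ->
  limit1_in g Rpos 0 0 -> limit1_in f Rpos l 0.
Proof.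
  intros [d0 [Hd0 Hfg]] Hg. apply lim_intro. intros eps He.
  destruct (lim_elim g 0 Hg eps He) as [d1 [Hd1 H1]].
  exists (Rmin d0 d1). split; [apply Rmin_pos; lra|].
  intros h Hh. pose proof (Rmin_l d0 d1); pose proof (Rmin_r d0 d1).
  specialize (H1 h ltac:(lra)). rewrite Rminus_0_r in H1.
  eapply Rle_lt_trans; [apply Hfg; lra|].
  eapply Rle_lt_trans; [apply Rle_abs | exact H1].
Qed.

Lemma lim_linear_squeeze (f : R -> R) (l C : R) :
  (exists del, 0 < del /\ forall h, 0 < h < del -> Rabs (f h - l) <= C * h) ->
  limit1_in f Rpos l 0.
Proof.
  intros Hb. apply (lim_squeeze _ (fun h => C * h) _ Hb).
  apply (lim_eq _ (C * 0)); [|ring]. apply limit_mul; [apply lim_const | apply lim_id].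
Qed.

Lemma lim_cont (F f : R -> R) (l : R) :
  continuity_pt F l -> limit1_in f Rpos l 0 -> limit1_in (fun h => F (f h)) Rpos (F l) 0.
Proof.
  intros HF Hf. apply lim_intro. intros eps He.
  destruct (HF eps He) as [a [Ha HFa]].
  destruct (lim_elim f l Hf a Ha) as [d [Hd Hd']].
  exists d. split; [exact Hd|]. intros h Hh.
  destruct (Req_dec (f h) l) as [E|E].
  - rewrite E, Rminus_eq_0, Rabs_R0. exact He.
  - apply (HFa (f h)). repeat split; [intro Heq; apply E; auto|]. apply Hd', Hh.
Qed.

Lemma lim_bound (f : R -> R) (l : R) : limit1_in f Rpos l 0 ->
  exists del, 0 < del /\ forall h, 0 < h < del -> Rabs (f h) <= Rabs l + 1.
Proof.
  intros H. destruct (lim_elim f l H 1 Rlt_0_1) as [d [Hd Hd']].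
  exists d. split; [exact Hd|]. intros h Hh. specialize (Hd' h Hh).
  pose proof (Rabs_triang_inv (f h) l). lra.
Qed.

Lemma lim_deriv (F : R -> R) (l : R) :
  derivable_pt_lim F 0 l -> F 0 = 0 -> limit1_in (fun h => F h / h) Rpos l 0.
Proof.
  intros HF H0. apply lim_intro. intros eps He.
  destruct (HF eps He) as [[d Hd] Hd']. exists d. split; [exact Hd|].
  intros h Hh. specialize (Hd' h ltac:(intro; lra)).
  rewrite Rplus_0_l, H0, Rminus_0_r in Hd'.
  apply Hd'. simpl. rewrite Rabs_pos_eq; lra.
Qed.

Lemma lim_seq (f : R -> R) (l : R) (u : nat -> R) :
  limit1_in f Rpos l 0 -> (forall n, 0 < u n) -> Un_cv u 0 -> Un_cv (fun n => f (u n)) l.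
Proof.
  intros Hf Hu Hcv eps He.
  destruct (lim_elim f l Hf eps He) as [d [Hd Hd']].
  destruct (Hcv d Hd) as [N HN]. exists N. intros n Hn.
  unfold R_dist. apply Hd'. specialize (HN n Hn). unfold R_dist in HN.
  rewrite Rminus_0_r, Rabs_pos_eq in HN by (left; apply Hu). split; [apply Hu | exact HN].
Qed.

Lemma exp_quadratic_remainder (v V x h : R) : Rabs v <= V -> 0 < h <= 1 ->
  Rabs (exp (v * h ^ 2 * x) - 1 - v * h ^ 2 * x) <= V ^ 2 * x ^ 2 * exp (V * Rabs x) * h ^ 3.
Proof.
  intros HV Hh.
  assert (Hh2 : 0 < h ^ 2 <= 1) by (split; [apply pow_lt; lra | nra]).
  assert (Ht : Rabs (v * h ^ 2 * x) <= V * Rabs x).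
  { rewrite !Rabs_mult, (Rabs_pos_eq (h ^ 2)) by lra.
    pose proof (Rabs_pos v); pose proof (Rabs_pos x).
    apply Rmult_le_compat_r; nra. }
  eapply Rle_trans; [apply exp_taylor2|].
  assert (Hv2 : v ^ 2 <= V ^ 2)
    by (rewrite <- (pow2_abs v); apply pow_incr; split; [apply Rabs_pos | exact HV]).
  assert (Hpoly : (v * h ^ 2 * x) ^ 2 <= V ^ 2 * x ^ 2 * h ^ 3).
  { replace ((v * h ^ 2 * x) ^ 2) with (v ^ 2 * x ^ 2 * (h * h ^ 3)) by ring.
    pose proof (pow2_ge_0 v). pose proof (pow2_ge_0 x). pose proof (pow_lt h 3).
    apply Rmult_le_compat; nra. }
  replace (V ^ 2 * x ^ 2 * exp (V * Rabs x) * h ^ 3)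
    with (V ^ 2 * x ^ 2 * h ^ 3 * exp (V * Rabs x)) by ring.
  apply Rmult_le_compat; [apply pow2_ge_0 | left; apply exp_pos | exact Hpoly
    | apply exp_le_mono, Ht].
Qed.

Lemma exp_second_order_lim (u : R -> R) (c x : R) :
  limit1_in (fun h => u h / h ^ 2) Rpos c 0 ->
  limit1_in (fun h => (exp (u h * x) - 1) / h ^ 2) Rpos (c * x) 0.
Proof.
  intros Hu. destruct (lim_bound _ _ Hu) as [d [Hd HV]].
  set (V := Rabs c + 1).
  apply (lim_ext_near _ (fun h => u h / h ^ 2 * x + (exp (u h * x) - 1 - u h * x) / h ^ 2)).
  { exists 1. split; [lra|]. intros h Hh. field. lra. }
  apply (lim_eq _ (c * x + 0)); [|ring].
  apply limit_plus; [apply limit_mul; [exact Hu | apply lim_const]|].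
  apply (lim_linear_squeeze _ _ (V ^ 2 * x ^ 2 * exp (V * Rabs x))).
  exists (Rmin 1 d). split; [apply Rmin_pos; lra|].
  intros h Hh. pose proof (Rmin_l 1 d); pose proof (Rmin_r 1 d).
  assert (Hh2 : 0 < h ^ 2) by (apply pow_lt; lra).
  specialize (HV h ltac:(lra)). set (v := u h / h ^ 2) in HV.
  replace (u h) with (v * h ^ 2) by (unfold v; field; lra).
  rewrite Rminus_0_r. unfold Rdiv. rewrite Rabs_mult, Rabs_inv, (Rabs_pos_eq (h ^ 2)) by lra.
  apply (Rmult_le_reg_r (h ^ 2)); [exact Hh2|].
  rewrite Rmult_assoc, Rinv_l, Rmult_1_r by lra.
  replace (V ^ 2 * x ^ 2 * exp (V * Rabs x) * h * h ^ 2)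
    with (V ^ 2 * x ^ 2 * exp (V * Rabs x) * h ^ 3) by ring.
  apply exp_quadratic_remainder; [exact HV | lra].
Qed.

(** ** Jump intensities and the characteristic polynomial

    [psih] is the Laplace exponent of the walk with up-jumps of intensity
    [lam_p] and down-jumps of intensity [lam_m]; killing at rate [q] gives the
    total rate [lam_tot].  The roots [b] of [psih b = q] correspond to the roots
    [r = exp (b h)] of [char_poly]. *)

Definition lam_p (s2 mu h : R) : R := s2 / (2 * h ^ 2) + mu / (2 * h).
Definition lam_m (s2 mu h : R) : R := s2 / (2 * h ^ 2) - mu / (2 * h).
Definition lam_tot (s2 mu q h : R) : R := lam_p s2 mu h + lam_m s2 mu h + q.
Definition char_poly (s2 mu q h r : R) : R :=
  lam_p s2 mu h * r ^ 2 - lam_tot s2 mu q h * r + lam_m s2 mu h.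

Lemma psih_lambda (s2 mu h b : R) : 0 < h ->
  psih s2 mu h b = lam_p s2 mu h * (exp (b * h) - 1) + lam_m s2 mu h * (exp (- (b * h)) - 1).
Proof. intros Hh. unfold psih, lam_p, lam_m. field. lra. Qed.

Lemma psih_char (s2 mu q h b : R) : 0 < h ->
  psih s2 mu h b - q = char_poly s2 mu q h (exp (b * h)) / exp (b * h).
Proof.
  intros Hh. pose proof (exp_pos (b * h)).
  rewrite psih_lambda, exp_Ropp by exact Hh. unfold char_poly, lam_tot. field. lra.
Qed.

Lemma psih_root (s2 mu q h r : R) : 0 < h -> 0 < r ->
  char_poly s2 mu q h r = 0 -> psih s2 mu h (ln r / h) = q.
Proof.
  intros Hh Hr Hc. apply Rminus_diag_uniq.
  rewrite psih_char by exact Hh.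
  replace (ln r / h * h) with (ln r) by (field; lra).
  rewrite exp_ln, Hc by exact Hr. unfold Rdiv. ring.
Qed.

(** ** Second-order expansion of the roots of [psih = q] *)

Section RootExpansion.
Variables s2 mu : R.
Hypothesis Hs2 : 0 < s2.

(** The [h^2]-coefficient of [psih - psi]. *)
Definition psi_corr (beta : R) : R := mu * beta ^ 3 / 6 + s2 * beta ^ 4 / 24.

Definition exp_rem5 (t : R) : R := exp t - (1 + t + t ^ 2 / 2 + t ^ 3 / 6 + t ^ 4 / 24).

Lemma psih_remainder_eq (beta h : R) : 0 < h ->
  psih s2 mu h beta - psi s2 mu beta - h ^ 2 * psi_corr beta
  = (mu * (exp_rem5 (beta * h) - exp_rem5 (- (beta * h))) * h
     + s2 * (exp_rem5 (beta * h) + exp_rem5 (- (beta * h)))) / (2 * h ^ 2).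
Proof. intros Hh. unfold psih, psi, psi_corr, exp_rem5. field. lra. Qed.

Lemma psih_expansion (B beta h : R) : Rabs beta <= B -> 0 < h <= 1 ->
  Rabs (psih s2 mu h beta - psi s2 mu beta - h ^ 2 * psi_corr beta)
    <= (Rabs mu + s2) * B ^ 5 * exp B * h ^ 3.
Proof.
  intros HB Hh.
  set (K := B ^ 5 * h ^ 5 * exp B).
  assert (Hrem : forall t, Rabs t <= B * h -> Rabs (exp_rem5 t) <= K).
  { intros t Ht. eapply Rle_trans; [apply exp_taylor5|].
    assert (Hbh : B * h <= B) by (pose proof (Rabs_pos beta); nra).
    unfold K. rewrite <- Rpow_mult_distr.
    apply Rmult_le_compat; [apply pow_le, Rabs_pos | left; apply exp_pos
      | apply pow_incr; split; [apply Rabs_pos | exact Ht] | apply exp_le_mono; lra]. }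
  assert (Ht : Rabs (beta * h) <= B * h)
    by (rewrite Rabs_mult, (Rabs_pos_eq h) by lra; apply Rmult_le_compat_r; lra).
  assert (Ht' : Rabs (- (beta * h)) <= B * h) by (rewrite Rabs_Ropp; exact Ht).
  pose proof (Hrem _ Ht) as H1. pose proof (Hrem _ Ht') as H2.
  set (e1 := exp_rem5 (beta * h)) in *. set (e2 := exp_rem5 (- (beta * h))) in *.
  assert (Hh2 : 0 < 2 * h ^ 2) by (pose proof (pow_lt h 2); nra).
  rewrite psih_remainder_eq by lra. unfold Rdiv.
  rewrite Rabs_mult, Rabs_inv, (Rabs_pos_eq (2 * h ^ 2)) by lra.
  apply (Rmult_le_reg_r (2 * h ^ 2)); [exact Hh2|].
  rewrite Rmult_assoc, Rinv_l, Rmult_1_r by lra.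
  assert (Hnum : Rabs (mu * (e1 - e2) * h + s2 * (e1 + e2)) <= 2 * K * (Rabs mu + s2)).
  { eapply Rle_trans; [apply Rabs_triang|].
    rewrite !Rabs_mult, (Rabs_pos_eq h), (Rabs_pos_eq s2) by lra.
    pose proof (Rabs_triang e1 (- e2)). rewrite Rabs_Ropp in *.
    pose proof (Rabs_triang e1 e2). pose proof (Rabs_pos mu).
    pose proof (Rabs_pos (e1 - e2)). pose proof (Rabs_pos (e1 + e2)).
    assert (Rabs (e1 - e2) <= 2 * K) by (unfold Rminus; lra).
    assert (Rabs (e1 - e2) * h <= 2 * K) by nra.
    assert (Rabs mu * (Rabs (e1 - e2) * h) <= Rabs mu * (2 * K))
      by (apply Rmult_le_compat_l; lra).
    nra. }
  eapply Rle_trans; [exact Hnum|]. unfold K.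
  assert (0 <= B) by (pose proof (Rabs_pos beta); lra).
  pose proof (pow_le B 5 H). pose proof (exp_pos B). pose proof (Rabs_pos mu).
  replace ((Rabs mu + s2) * B ^ 5 * exp B * h ^ 3 * (2 * h ^ 2))
    with (2 * (B ^ 5 * h ^ 5 * exp B) * (Rabs mu + s2)) by ring.
  lra.
Qed.

(** The algebraic identity behind [root_expansion]: it uses
    [psi Phi - psi al = (Phi - al) (s2 (Phi + al)/2 + mu)]. *)
Lemma root_difference_quotient (Phi al h : R) : 0 < h ->
  psih s2 mu h Phi = psi s2 mu al -> s2 * (Phi + al) / 2 + mu <> 0 ->
  (Phi - al) / h ^ 2
  = - (psi_corr Phi
       + (psih s2 mu h Phi - psi s2 mu Phi - h ^ 2 * psi_corr Phi) / h ^ 2)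
    / (s2 * (Phi + al) / 2 + mu).
Proof.
  intros Hh Hroot Hden.
  rewrite Hroot. unfold psi. field. split; [lra | contradict Hden; lra].
Qed.

Lemma root_expansion (Phi : R -> R) (al : R) :
  limit1_in Phi Rpos al 0 -> s2 * al + mu <> 0 ->
  (exists del, 0 < del /\ forall h, 0 < h < del -> psih s2 mu h (Phi h) = psi s2 mu al) ->
  limit1_in (fun h => (Phi h - al) / h ^ 2) Rpos (- psi_corr al / (s2 * al + mu)) 0.
Proof.
  intros HPhi Hden [d0 [Hd0 Hroot]].
  set (den := fun h => s2 * (Phi h + al) / 2 + mu).
  set (rem := fun h =>
    (psih s2 mu h (Phi h) - psi s2 mu (Phi h) - h ^ 2 * psi_corr (Phi h)) / h ^ 2).
  assert (Hden_lim : limit1_in den Rpos (s2 * al + mu) 0).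
  { apply (lim_eq _ (s2 * (al + al) / 2 + mu)); [|field].
    apply limit_plus; [|apply lim_const].
    apply (limit_mul (fun h => s2 * (Phi h + al)) (fun _ => / 2)); [|apply lim_const].
    apply limit_mul; [apply lim_const | apply limit_plus; [exact HPhi | apply lim_const]]. }
  assert (Hrem_lim : limit1_in rem Rpos 0 0).
  { destruct (lim_bound Phi al HPhi) as [d1 [Hd1 HB]].
    apply (lim_linear_squeeze _ _ ((Rabs mu + s2) * (Rabs al + 1) ^ 5 * exp (Rabs al + 1))).
    exists (Rmin 1 d1). split; [apply Rmin_pos; lra|].
    intros h Hh. pose proof (Rmin_l 1 d1); pose proof (Rmin_r 1 d1).
    assert (Hh2 : 0 < h ^ 2) by (apply pow_lt; lra).
    unfold rem. rewrite Rminus_0_r. unfold Rdiv.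
    rewrite Rabs_mult, Rabs_inv, (Rabs_pos_eq (h ^ 2)) by lra.
    apply (Rmult_le_reg_r (h ^ 2)); [exact Hh2|].
    rewrite Rmult_assoc, Rinv_l, Rmult_1_r by lra.
    replace (_ * h * h ^ 2) with ((Rabs mu + s2) * (Rabs al + 1) ^ 5 * exp (Rabs al + 1) * h ^ 3)
      by ring.
    apply psih_expansion; [apply HB|]; lra. }
  assert (Hcorr_lim : limit1_in (fun h => psi_corr (Phi h)) Rpos (psi_corr al) 0)
    by (apply lim_cont; [unfold psi_corr; reg | exact HPhi]).
  destruct (lim_elim den _ Hden_lim (Rabs (s2 * al + mu) / 2)) as [d2 [Hd2 Hden2]].
  { pose proof (Rabs_pos_lt _ Hden). lra. }
  apply (lim_ext_near _ (fun h => - (psi_corr (Phi h) + rem h) / den h)).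
  - exists (Rmin d0 d2). split; [apply Rmin_pos; lra|].
    intros h Hh. pose proof (Rmin_l d0 d2); pose proof (Rmin_r d0 d2).
    specialize (Hden2 h ltac:(lra)). pose proof (Rabs_pos_lt _ Hden).
    apply root_difference_quotient; [lra | apply Hroot; lra|].
    intro E. fold (den h) in E. rewrite E, Rminus_0_l, Rabs_Ropp in Hden2. lra.
  - apply (lim_eq _ (- (psi_corr al + 0) * / (s2 * al + mu))); [|field; auto].
    apply limit_mul; [apply limit_Ropp, limit_plus; auto|].
    apply limit_inv; auto.
Qed.

End RootExpansion.

(** ** The two roots of [psih = q] in closed form

    Clearing denominators, [char_poly (N / (s2 + mu h)) = 0] becomes the
    quadratic [char_num N = 0], whose roots are [s2 + q h^2 +- h E_h] with
    [E_h = sqrt (mu^2 + 2 s2 q + q^2 h^2)]. *)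

Definition char_num (s2 mu q h N : R) : R :=
  N ^ 2 - 2 * (s2 + q * h ^ 2) * N + (s2 ^ 2 - mu ^ 2 * h ^ 2).

Lemma char_poly_scaled (s2 mu q h N : R) : 0 < h -> 0 < s2 + mu * h ->
  char_poly s2 mu q h (N / (s2 + mu * h)) = char_num s2 mu q h N / (2 * h ^ 2 * (s2 + mu * h)).
Proof. intros Hh HM. unfold char_poly, char_num, lam_tot, lam_p, lam_m. field. lra. Qed.

Section ExplicitRoots.
Variables s2 mu q : R.
Hypothesis Hs2 : 0 < s2.
Hypothesis Hq : 0 <= q.
Hypothesis Hpos : 0 < Rmax q (Rabs mu).

Lemma disc_sq_pos : 0 < mu ^ 2 + 2 * s2 * q.
Proof.
  unfold Rmax in Hpos. destruct (Rle_dec q (Rabs mu)); [|nra].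
  assert (mu <> 0) by (intro E; rewrite E, Rabs_R0 in Hpos; lra).
  pose proof (pow2_gt_0 mu H). nra.
Qed.

Lemma disc_pos : 0 < disc s2 mu q.
Proof. apply sqrt_lt_R0, disc_sq_pos. Qed.

Lemma disc_sq : disc s2 mu q * disc s2 mu q = mu ^ 2 + 2 * s2 * q.
Proof. apply sqrt_sqrt. left; apply disc_sq_pos. Qed.

(** [alpha_p] and [alpha_m] are the simple roots of [psi = q]; the values of
    [psi'] and [psi_corr] there produce the coefficients [theta_p], [theta_m]. *)

Lemma psi_alpha_p : psi s2 mu (alpha_p s2 mu q) = q.
Proof.
  pose proof disc_sq. unfold psi, alpha_p. field_simplify; [|lra].
  replace (disc s2 mu q ^ 2) with (mu ^ 2 + 2 * s2 * q) by (rewrite <- H; ring).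
  field. lra.
Qed.

Lemma psi_alpha_m : psi s2 mu (alpha_m s2 mu q) = q.
Proof.
  pose proof disc_sq. unfold psi, alpha_m. field_simplify; [|lra].
  replace (disc s2 mu q ^ 2) with (mu ^ 2 + 2 * s2 * q) by (rewrite <- H; ring).
  field. lra.
Qed.

Lemma psi_slope_p : s2 * alpha_p s2 mu q + mu = disc s2 mu q.
Proof. unfold alpha_p. field. lra. Qed.

Lemma psi_slope_m : s2 * alpha_m s2 mu q + mu = - disc s2 mu q.
Proof. unfold alpha_m. field. lra. Qed.

Lemma psi_corr_alpha_p : psi_corr s2 mu (alpha_p s2 mu q) = disc s2 mu q * theta_p s2 mu q.
Proof.
  pose proof disc_sq as HD. pose proof disc_pos.
  unfold psi_corr, alpha_p, theta_p. set (D := disc s2 mu q) in *. clearbody D.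
  replace q with ((D * D - mu ^ 2) / (2 * s2)) by (rewrite HD; field; lra).
  field. lra.
Qed.

Lemma psi_corr_alpha_m : psi_corr s2 mu (alpha_m s2 mu q) = - (disc s2 mu q * theta_m s2 mu q).
Proof.
  pose proof disc_sq as HD. pose proof disc_pos.
  unfold psi_corr, alpha_m, theta_m. set (D := disc s2 mu q) in *. clearbody D.
  replace q with ((D * D - mu ^ 2) / (2 * s2)) by (rewrite HD; field; lra).
  field. lra.
Qed.

Definition Eh (h : R) : R := sqrt (mu ^ 2 + 2 * s2 * q + q ^ 2 * h ^ 2).
Definition Mh (h : R) : R := s2 + mu * h.
Definition N1 (h : R) : R := s2 + q * h ^ 2 + h * Eh h.
Definition N2 (h : R) : R := s2 + q * h ^ 2 - h * Eh h.
Definition r1 (h : R) : R := N1 h / Mh h.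
Definition r2 (h : R) : R := N2 h / Mh h.
Definition Phi1 (h : R) : R := ln (r1 h) / h.
Definition Phi2 (h : R) : R := ln (r2 h) / h.

Lemma Eh_sq (h : R) : Eh h * Eh h = mu ^ 2 + 2 * s2 * q + q ^ 2 * h ^ 2.
Proof. apply sqrt_sqrt. pose proof disc_sq_pos. nra. Qed.

Lemma Eh_pos (h : R) : 0 < Eh h.
Proof. apply sqrt_lt_R0. pose proof disc_sq_pos. nra. Qed.

Lemma Eh_ge (h : R) : disc s2 mu q <= Eh h.
Proof. apply sqrt_le_1_alt. nra. Qed.

Lemma Eh_le (h : R) : 0 <= h -> Eh h <= disc s2 mu q + q * h.
Proof.
  intros Hh. pose proof (Eh_sq h). pose proof disc_sq. pose proof disc_pos. pose proof (Eh_pos h).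
  apply Rnot_lt_le. intro Hn. assert (0 <= q * h) by nra. nra.
Qed.

Lemma char_num_N1 (h : R) : char_num s2 mu q h (N1 h) = 0.
Proof.
  unfold char_num, N1. pose proof (Eh_sq h) as HE.
  replace (_ + _) with (h ^ 2 * (Eh h * Eh h - (mu ^ 2 + 2 * s2 * q + q ^ 2 * h ^ 2))) by ring.
  rewrite HE. ring.
Qed.

Lemma char_num_N2 (h : R) : char_num s2 mu q h (N2 h) = 0.
Proof.
  unfold char_num, N2. pose proof (Eh_sq h) as HE.
  replace (_ + _) with (h ^ 2 * (Eh h * Eh h - (mu ^ 2 + 2 * s2 * q + q ^ 2 * h ^ 2))) by ring.
  rewrite HE. ring.
Qed.

(** Below [h1] the mesh is small enough for both roots to be positive. *)
Definition h1 : R := Rmin (Rmin 1 (s2 / (Rabs mu + 1))) (s2 / (disc s2 mu q + 1)).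

Lemma h1_pos : 0 < h1.
Proof.
  pose proof disc_pos. pose proof (Rabs_pos mu).
  apply Rmin_pos; [apply Rmin_pos|]; try apply Rdiv_lt_0_compat; lra.
Qed.

Lemma small_mesh (h : R) : 0 < h < h1 -> h < 1 /\ 0 < Mh h /\ 0 < N2 h /\ 0 < N1 h.
Proof.
  intros Hh. unfold h1 in Hh.
  pose proof (Rmin_l (Rmin 1 (s2 / (Rabs mu + 1))) (s2 / (disc s2 mu q + 1))).
  pose proof (Rmin_r (Rmin 1 (s2 / (Rabs mu + 1))) (s2 / (disc s2 mu q + 1))).
  pose proof (Rmin_l 1 (s2 / (Rabs mu + 1))). pose proof (Rmin_r 1 (s2 / (Rabs mu + 1))).
  pose proof disc_pos. pose proof (Rabs_pos mu).
  assert (Hmul : forall c a, 0 < c -> h < a / c -> h * c < a).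
  { intros c a Hc Hlt. apply (Rmult_lt_compat_r c) in Hlt; [|exact Hc].
    unfold Rdiv in Hlt. rewrite Rmult_assoc, Rinv_l, Rmult_1_r in Hlt by lra. exact Hlt. }
  assert (Ha : h * (Rabs mu + 1) < s2) by (apply Hmul; lra).
  assert (Hb : h * (disc s2 mu q + 1) < s2) by (apply Hmul; lra).
  pose proof (Eh_le h ltac:(lra)). pose proof (Eh_pos h). pose proof (Rle_abs (- mu)).
  rewrite Rabs_Ropp in *. unfold Mh, N1, N2. repeat split; nra.
Qed.

Lemma r1_pos (h : R) : 0 < h < h1 -> 0 < r1 h.
Proof. intros Hh. destruct (small_mesh h Hh) as [? [? [? ?]]]. apply Rdiv_lt_0_compat; lra. Qed.

Lemma r2_pos (h : R) : 0 < h < h1 -> 0 < r2 h.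
Proof. intros Hh. destruct (small_mesh h Hh) as [? [? [? ?]]]. apply Rdiv_lt_0_compat; lra. Qed.

Lemma char_poly_r1 (h : R) : 0 < h < h1 -> char_poly s2 mu q h (r1 h) = 0.
Proof.
  intros Hh. destruct (small_mesh h Hh) as [_ [HM _]]. unfold r1, Mh in *.
  rewrite char_poly_scaled, char_num_N1 by lra. unfold Rdiv. ring.
Qed.

Lemma char_poly_r2 (h : R) : 0 < h < h1 -> char_poly s2 mu q h (r2 h) = 0.
Proof.
  intros Hh. destruct (small_mesh h Hh) as [_ [HM _]]. unfold r2, Mh in *.
  rewrite char_poly_scaled, char_num_N2 by lra. unfold Rdiv. ring.
Qed.

(** [Phi1 -> alpha_p] and [Phi2 -> alpha_m]: [h Phi_i] is a smooth function
    of [h] vanishing at [0] with derivative [alpha_i] there. *)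

Lemma Phi1_lim : limit1_in Phi1 Rpos (alpha_p s2 mu q) 0.
Proof.
  pose proof disc_sq_pos.
  assert (sqrt (mu ^ 2 + 2 * s2 * q) > 0) by (apply sqrt_lt_R0; lra).
  apply (lim_ext_near _ (fun h => (ln (s2 + q * h ^ 2 + h * sqrt (mu ^ 2 + 2 * s2 * q + q ^ 2 * h ^ 2))
                                   - ln (s2 + mu * h)) / h)).
  - exists h1. split; [apply h1_pos|]. intros h Hh. destruct (small_mesh h Hh) as [? [? [? ?]]].
    unfold Phi1, r1. rewrite ln_div by lra. reflexivity.
  - apply lim_deriv.
    + apply is_derive_Reals. auto_derive.
      all: replace (mu * (mu * 1) + 2 * s2 * q + q * (q * 1) * (0 * (0 * 1)))
             with (mu ^ 2 + 2 * s2 * q) by ring.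
      * repeat split; nra.
      * unfold alpha_p, disc.
        field; repeat split; try ((apply Rgt_not_eq; lra) || (apply Rlt_not_eq; lra)).
    + replace (s2 + q * 0 ^ 2 + 0 * sqrt (mu ^ 2 + 2 * s2 * q + q ^ 2 * 0 ^ 2))
        with (s2 + mu * 0) by ring. ring.
Qed.

Lemma Phi2_lim : limit1_in Phi2 Rpos (alpha_m s2 mu q) 0.
Proof.
  pose proof disc_sq_pos.
  assert (sqrt (mu ^ 2 + 2 * s2 * q) > 0) by (apply sqrt_lt_R0; lra).
  apply (lim_ext_near _ (fun h => (ln (s2 + q * h ^ 2 - h * sqrt (mu ^ 2 + 2 * s2 * q + q ^ 2 * h ^ 2))
                                   - ln (s2 + mu * h)) / h)).
  - exists h1. split; [apply h1_pos|]. intros h Hh. destruct (small_mesh h Hh) as [? [? [? ?]]].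
    unfold Phi2, r2. rewrite ln_div by lra. reflexivity.
  - apply lim_deriv.
    + apply is_derive_Reals. auto_derive.
      all: replace (mu * (mu * 1) + 2 * s2 * q + q * (q * 1) * (0 * (0 * 1)))
             with (mu ^ 2 + 2 * s2 * q) by ring.
      * repeat split; nra.
      * unfold alpha_m, disc.
        field; repeat split; try ((apply Rgt_not_eq; lra) || (apply Rlt_not_eq; lra)).
    + replace (s2 + q * 0 ^ 2 - 0 * sqrt (mu ^ 2 + 2 * s2 * q + q ^ 2 * 0 ^ 2))
        with (s2 + mu * 0) by ring. ring.
Qed.

Lemma Phi1_expansion :
  limit1_in (fun h => (Phi1 h - alpha_p s2 mu q) / h ^ 2) Rpos (- theta_p s2 mu q) 0.
Proof.
  pose proof disc_pos.
  apply (lim_eq _ (- psi_corr s2 mu (alpha_p s2 mu q) / (s2 * alpha_p s2 mu q + mu))).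
  - apply root_expansion; [exact Hs2 | apply Phi1_lim | rewrite psi_slope_p; lra|].
    exists h1. split; [apply h1_pos|]. intros h Hh. rewrite psi_alpha_p.
    apply psih_root; [lra | apply r1_pos, Hh | apply char_poly_r1, Hh].
  - rewrite psi_slope_p, psi_corr_alpha_p. field. lra.
Qed.

Lemma Phi2_expansion :
  limit1_in (fun h => (Phi2 h - alpha_m s2 mu q) / h ^ 2) Rpos (- theta_m s2 mu q) 0.
Proof.
  pose proof disc_pos.
  apply (lim_eq _ (- psi_corr s2 mu (alpha_m s2 mu q) / (s2 * alpha_m s2 mu q + mu))).
  - apply root_expansion; [exact Hs2 | apply Phi2_lim | rewrite psi_slope_m; lra|].
    exists h1. split; [apply h1_pos|]. intros h Hh. rewrite psi_alpha_m.
    apply psih_root; [lra | apply r2_pos, Hh | apply char_poly_r2, Hh].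
  - rewrite psi_slope_m, psi_corr_alpha_m. field. lra.
Qed.

(** ** Second-order asymptotics of the difference

    [Gf x h] is [W(x)] minus the closed form of [W_h(x - h)] on the grid (see
    [DeltaW_closed_form] below).  Writing [exp (Phi_i x)] as
    [exp (alpha_i x) * exp ((Phi_i - alpha_i) x)] splits it into three terms,
    each [O(h^2)]. *)

Definition Gf (x h : R) : R :=
  (exp (alpha_p s2 mu q * x) - exp (alpha_m s2 mu q * x)) / disc s2 mu q
  - (exp (Phi1 h * x) - exp (Phi2 h * x)) / Eh h.

Lemma Gf_split (x h : R) :
  Gf x h = (exp (alpha_p s2 mu q * x) - exp (alpha_m s2 mu q * x))
             * (1 / disc s2 mu q - 1 / Eh h)
           - exp (alpha_p s2 mu q * x) * (exp ((Phi1 h - alpha_p s2 mu q) * x) - 1) / Eh h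
           + exp (alpha_m s2 mu q * x) * (exp ((Phi2 h - alpha_m s2 mu q) * x) - 1) / Eh h.
Proof.
  pose proof disc_pos. pose proof (Eh_pos h). unfold Gf.
  replace (exp (Phi1 h * x))
    with (exp (alpha_p s2 mu q * x) * exp ((Phi1 h - alpha_p s2 mu q) * x))
    by (rewrite <- exp_plus; f_equal; ring).
  replace (exp (Phi2 h * x))
    with (exp (alpha_m s2 mu q * x) * exp ((Phi2 h - alpha_m s2 mu q) * x))
    by (rewrite <- exp_plus; f_equal; ring).
  field. split; lra.
Qed.

Lemma Eh_defect (h : R) : h <> 0 ->
  (1 / disc s2 mu q - 1 / Eh h) / h ^ 2
  = q ^ 2 / (disc s2 mu q * Eh h * (Eh h + disc s2 mu q)).
Proof.
  intros Hh. pose proof disc_pos. pose proof (Eh_pos h). pose proof (Eh_sq h). pose proof disc_sq.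
  replace (q ^ 2) with ((Eh h * Eh h - disc s2 mu q * disc s2 mu q) / h ^ 2)
    by (rewrite H1, H2; field; exact Hh).
  field. repeat split; try exact Hh; lra.
Qed.

Lemma Eh_lim : limit1_in Eh Rpos (disc s2 mu q) 0.
Proof.
  pose proof disc_sq_pos.
  apply (lim_cont sqrt (fun h => mu ^ 2 + 2 * s2 * q + q ^ 2 * h ^ 2) (mu ^ 2 + 2 * s2 * q));
    [apply continuity_pt_sqrt; lra|].
  apply (lim_eq _ (mu ^ 2 + 2 * s2 * q + q ^ 2 * (0 * 0))); [|ring].
  apply limit_plus; [apply lim_const|].
  replace (fun h => q ^ 2 * h ^ 2) with (fun h => q ^ 2 * (h * h))
    by (apply functional_extensionality; intros; ring).
  apply limit_mul; [apply lim_const | apply limit_mul; apply lim_id].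
Qed.

Lemma Gf_lim (x : R) : 0 <= x ->
  limit1_in (fun h => Gf x h / h ^ 2) Rpos (delta_limit s2 mu q x) 0.
Proof.
  intros Hx. pose proof disc_pos as HD. pose proof disc_sq as HDD.
  set (a := alpha_p s2 mu q). set (b := alpha_m s2 mu q). set (D := disc s2 mu q) in *.
  apply (lim_ext_near _ (fun h =>
      (exp (a * x) - exp (b * x)) * (q ^ 2 / (D * Eh h * (Eh h + D)))
      - exp (a * x) * ((exp ((Phi1 h - a) * x) - 1) / h ^ 2) * / Eh h
      + exp (b * x) * ((exp ((Phi2 h - b) * x) - 1) / h ^ 2) * / Eh h)).
  { exists 1. split; [lra|]. intros h Hh. pose proof (Eh_pos h). pose proof disc_pos.
    unfold a, b, D. rewrite Gf_split, <- Eh_defect by lra. field. lra. }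
  assert (Hinv : limit1_in (fun h => / Eh h) Rpos (/ D) 0)
    by (apply limit_inv; [apply Eh_lim | lra]).
  apply (lim_eq _ ((exp (a * x) - exp (b * x)) * (q ^ 2 * / (D * D * (D + D)))
     - exp (a * x) * (- theta_p s2 mu q * x) * / D + exp (b * x) * (- theta_m s2 mu q * x) * / D)).
  - apply limit_plus; [apply limit_minus|].
    + apply limit_mul; [apply lim_const|]. unfold Rdiv. apply limit_mul; [apply lim_const|].
      apply limit_inv; [|apply Rgt_not_eq, Rlt_gt, Rmult_lt_0_compat; nra].
      apply limit_mul; [apply limit_mul; [apply lim_const | apply Eh_lim]|].
      apply limit_plus; [apply Eh_lim | apply lim_const].
    + apply limit_mul; [|exact Hinv]. apply limit_mul; [apply lim_const|].
      apply exp_second_order_lim, Phi1_expansion.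
    + apply limit_mul; [|exact Hinv]. apply limit_mul; [apply lim_const|].
      apply exp_second_order_lim, Phi2_expansion.
  - unfold delta_limit, W. fold a b D.
    destruct (Rlt_dec x 0) as [Hn|_]; [lra|].
    destruct (Rlt_dec 0 (Rmax q (Rabs mu))) as [_|Hn]; [|lra].
    rewrite <- HDD. field. lra.
Qed.

Lemma root_term_bound (C al Phi x h : R) : 0 < h -> 0 <= x -> x * h ^ 2 <= 1 ->
  Rabs ((Phi - al) / h ^ 2) <= C -> exp (al * x) <= exp (alpha_p s2 mu q * x) ->
  Rabs (exp (al * x) * (exp ((Phi - al) * x) - 1) / Eh h)
    <= exp (alpha_p s2 mu q * x) * (C * exp C / disc s2 mu q) * h ^ 2 * x.
Proof.
  intros Hh Hx Hxh HC Hal.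
  pose proof disc_pos. pose proof (Eh_pos h). pose proof (Eh_ge h).
  assert (Hh2 : 0 < h ^ 2) by (apply pow_lt; lra).
  set (v := (Phi - al) / h ^ 2) in *.
  replace (Phi - al) with (v * h ^ 2) by (unfold v; field; lra).
  assert (HC0 : 0 <= C) by (pose proof (Rabs_pos v); lra).
  assert (Ht : Rabs (v * h ^ 2 * x) <= C * (h ^ 2 * x)).
  { rewrite !Rabs_mult, (Rabs_pos_eq (h ^ 2)), (Rabs_pos_eq x) by lra.
    rewrite Rmult_assoc. apply Rmult_le_compat_r; [nra | exact HC]. }
  assert (HT : Rabs (exp (v * h ^ 2 * x) - 1) <= C * exp C * (h ^ 2 * x)).
  { eapply Rle_trans; [apply exp_taylor1|].
    replace (C * exp C * (h ^ 2 * x)) with (C * (h ^ 2 * x) * exp C) by ring.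
    apply Rmult_le_compat; [apply Rabs_pos | left; apply exp_pos | exact Ht|].
    apply exp_le_mono. eapply Rle_trans; [exact Ht|]. nra. }
  unfold Rdiv. rewrite !Rabs_mult, Rabs_inv, (Rabs_pos_eq (exp (al * x))),
    (Rabs_pos_eq (Eh h)) by (try lra; left; apply exp_pos).
  assert (Hinv : / Eh h <= / disc s2 mu q) by (apply Rinv_le_contravar; lra).
  pose proof (exp_pos (al * x)). pose proof (Rabs_pos (exp (v * h ^ 2 * x) - 1)).
  replace (exp (alpha_p s2 mu q * x) * (C * exp C * / disc s2 mu q) * h ^ 2 * x)
    with (exp (alpha_p s2 mu q * x) * (C * exp C * (h ^ 2 * x)) * / disc s2 mu q) by ring.
  apply Rmult_le_compat; try lra; [apply Rmult_le_pos; lra | left; apply Rinv_0_lt_compat; lra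
    | apply Rmult_le_compat; lra].
Qed.

Lemma defect_term_bound (x h : R) : 0 < h -> 0 <= x ->
  Rabs ((exp (alpha_p s2 mu q * x) - exp (alpha_m s2 mu q * x)) * (1 / disc s2 mu q - 1 / Eh h))
    <= exp (alpha_p s2 mu q * x) * (q ^ 2 / disc s2 mu q ^ 3) * h ^ 2.
Proof.
  intros Hh Hx. pose proof disc_pos as HD. pose proof (Eh_pos h). pose proof (Eh_ge h).
  set (a := alpha_p s2 mu q). set (b := alpha_m s2 mu q). set (D := disc s2 mu q) in *.
  assert (Heb : exp (b * x) <= exp (a * x)).
  { apply exp_le_mono, Rmult_le_compat_r; [exact Hx|]. unfold a, b, alpha_p, alpha_m. fold D.
    apply Rmult_le_compat_r; [left; apply Rinv_0_lt_compat|]; lra. }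
  pose proof (exp_pos (b * x)). assert (Hh2 : 0 < h ^ 2) by (apply pow_lt; lra).
  replace (1 / D - 1 / Eh h) with (h ^ 2 * ((1 / D - 1 / Eh h) / h ^ 2)) by (field; lra).
  unfold D. rewrite Eh_defect by lra. fold D.
  assert (Hfrac : 0 <= q ^ 2 / (D * Eh h * (Eh h + D)) <= q ^ 2 / D ^ 3).
  { split; [apply Rdiv_le_0_compat; [apply pow2_ge_0 | apply Rmult_lt_0_compat; nra]|].
    unfold Rdiv. apply Rmult_le_compat_l; [apply pow2_ge_0|].
    apply Rinv_le_contravar; [apply pow_lt; lra|]. replace (D ^ 3) with (D * D * D) by ring.
    apply Rmult_le_compat; [nra | lra | apply Rmult_le_compat_l | ]; lra. }
  rewrite !Rabs_mult, (Rabs_pos_eq (exp (a * x) - exp (b * x))), (Rabs_pos_eq (h ^ 2)),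
    (Rabs_pos_eq (q ^ 2 / _)) by lra.
  replace (exp (a * x) * (q ^ 2 / D ^ 3) * h ^ 2)
    with (exp (a * x) * (h ^ 2 * (q ^ 2 / D ^ 3))) by ring.
  apply Rmult_le_compat; try lra; [apply Rmult_le_pos; lra|].
  apply Rmult_le_compat_l; lra.
Qed.

Lemma Gf_bound : exists A0 h0, 0 < A0 /\ 0 < h0 /\ h0 <= h1 /\
  forall h x, 0 < h < h0 -> 0 <= x -> x * h ^ 2 <= 1 ->
  Rabs (Gf x h) <= A0 * h ^ 2 * (1 + x) * exp (alpha_p s2 mu q * x).
Proof.
  destruct (lim_bound _ _ Phi1_expansion) as [d1 [Hd1 HB1]].
  destruct (lim_bound _ _ Phi2_expansion) as [d2 [Hd2 HB2]].
  set (C1 := Rabs (- theta_p s2 mu q) + 1) in *.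
  set (C2 := Rabs (- theta_m s2 mu q) + 1) in *.
  pose proof disc_pos as HD. set (D := disc s2 mu q) in *.
  set (K0 := q ^ 2 / D ^ 3). set (K1 := C1 * exp C1 / D). set (K2 := C2 * exp C2 / D).
  assert (HK0 : 0 <= K0) by (apply Rdiv_le_0_compat; [apply pow2_ge_0 | apply pow_lt; lra]).
  assert (HK : forall C, 0 <= C -> 0 <= C * exp C / D)
    by (intros C HC; apply Rdiv_le_0_compat; [pose proof (exp_pos C); nra | lra]).
  assert (HK1 : 0 <= K1) by (apply HK; unfold C1; pose proof (Rabs_pos (- theta_p s2 mu q)); lra).
  assert (HK2 : 0 <= K2) by (apply HK; unfold C2; pose proof (Rabs_pos (- theta_m s2 mu q)); lra).
  pose proof h1_pos.
  exists (K0 + K1 + K2 + 1), (Rmin h1 (Rmin d1 d2)).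
  split; [lra|]. split; [apply Rmin_pos; [lra | apply Rmin_pos; lra]|]. split; [apply Rmin_l|].
  intros h x Hh Hx Hxh.
  pose proof (Rmin_l h1 (Rmin d1 d2)); pose proof (Rmin_r h1 (Rmin d1 d2)).
  pose proof (Rmin_l d1 d2); pose proof (Rmin_r d1 d2).
  set (a := alpha_p s2 mu q) in *. set (b := alpha_m s2 mu q) in *.
  assert (Heb : exp (b * x) <= exp (a * x)).
  { apply exp_le_mono, Rmult_le_compat_r; [exact Hx|]. unfold a, b, alpha_p, alpha_m. fold D.
    apply Rmult_le_compat_r; [left; apply Rinv_0_lt_compat|]; lra. }
  pose proof (defect_term_bound x h ltac:(lra) Hx) as T0.
  pose proof (root_term_bound C1 a (Phi1 h) x h ltac:(lra) Hx Hxh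
                (HB1 h ltac:(lra)) (Rle_refl _)) as T1.
  pose proof (root_term_bound C2 b (Phi2 h) x h ltac:(lra) Hx Hxh (HB2 h ltac:(lra)) Heb) as T2.
  fold a b D K0 K1 K2 in T0, T1, T2.
  rewrite Gf_split. fold a b D.
  set (t0 := (exp (a * x) - exp (b * x)) * (1 / D - 1 / Eh h)) in *.
  set (t1 := exp (a * x) * (exp ((Phi1 h - a) * x) - 1) / Eh h) in *.
  set (t2 := exp (b * x) * (exp ((Phi2 h - b) * x) - 1) / Eh h) in *.
  assert (Htri : Rabs (t0 - t1 + t2) <= Rabs t0 + Rabs t1 + Rabs t2).
  { unfold Rminus. eapply Rle_trans; [apply Rabs_triang|].
    pose proof (Rabs_triang t0 (- t1)). rewrite Rabs_Ropp in H4. lra. }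
  assert (HP : 0 <= exp (a * x) * h ^ 2) by (pose proof (exp_pos (a * x)); pose proof (pow2_ge_0 h); nra).
  assert (Hsum : K0 + (K1 + K2) * x <= (K0 + K1 + K2 + 1) * (1 + x)) by nra.
  assert (Hscaled : exp (a * x) * h ^ 2 * (K0 + (K1 + K2) * x)
                    <= exp (a * x) * h ^ 2 * ((K0 + K1 + K2 + 1) * (1 + x)))
    by (apply Rmult_le_compat_l; lra).
  nra.
Qed.

End ExplicitRoots.

(** ** Identity theorem for power series on a right neighbourhood of [0] *)

Fixpoint sumk (f : nat -> R) (n : nat) : R :=
  match n with 0%nat => 0 | S m => sumk f m + f m end.

Lemma sumk_nonneg (f : nat -> R) (n : nat) : (forall k, 0 <= f k) -> 0 <= sumk f n.
Proof. intros Hf. induction n; simpl; [lra|]. pose proof (Hf n). lra. Qed.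

Lemma sumk_le_term (f : nat -> R) (n j : nat) :
  (j < n)%nat -> (forall k, 0 <= f k) -> f j <= sumk f n.
Proof.
  intros Hj Hf. induction n as [|n IHn]; [lia|]. simpl.
  destruct (Nat.eq_dec j n) as [->|Hne].
  - pose proof (sumk_nonneg f n Hf). lra.
  - pose proof (IHn ltac:(lia)). pose proof (Hf n). lra.
Qed.

Lemma sumk_zero (f : nat -> R) (m : nat) : (forall j, (j < m)%nat -> f j = 0) -> sumk f m = 0.
Proof.
  intros H. induction m as [|m IHm]; simpl; [lra|].
  rewrite IHm, H by (intros; try apply H; lia). lra.
Qed.

Definition pseries_sum (e : nat -> R) (z : R) (n : nat) : R := sumk (fun k => e k * z ^ k) n.

Lemma series_terms_bounded (e : nat -> R) (z l : R) :
  Un_cv (pseries_sum e z) l -> exists M, 0 <= M /\ forall k, Rabs (e k * z ^ k) <= M.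
Proof.
  intros Hcv. destruct (Hcv 1 Rlt_0_1) as [N HN].
  set (f := fun k => Rabs (e k * z ^ k)).
  exists (2 + sumk f N).
  pose proof (sumk_nonneg f N (fun k => Rabs_pos _)).
  split; [lra|]. intros k. destruct (Nat.lt_ge_cases k N) as [Hk|Hk].
  - pose proof (sumk_le_term f N k Hk (fun k => Rabs_pos _)). unfold f in *. lra.
  - pose proof (HN k Hk) as A. pose proof (HN (S k) ltac:(lia)) as B.
    unfold R_dist, pseries_sum in A, B. simpl in B.
    set (S := sumk (fun k => e k * z ^ k) k) in *.
    replace (e k * z ^ k) with ((S + e k * z ^ k - l) - (S - l)) by ring.
    pose proof (Rabs_triang (S + e k * z ^ k - l) (- (S - l))). rewrite Rabs_Ropp in H0.
    unfold Rminus at 1. lra.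
Qed.

Lemma leading_term_tail (e : nat -> R) (M z1 z : R) (m : nat) :
  0 < z1 -> 0 < z <= z1 / 2 -> (forall k, Rabs (e k * z1 ^ k) <= M) ->
  (forall j, (j < m)%nat -> e j = 0) ->
  forall j, Rabs (pseries_sum e z (S m + j) - e m * z ^ m)
            <= 2 * M * (z / z1) ^ (S m) * (1 - (1 / 2) ^ j).
Proof.
  intros Hz1 Hz HM Hlow. set (rho := z / z1).
  assert (Hrho : 0 < rho <= 1 / 2).
  { unfold rho. split; [apply Rdiv_lt_0_compat; lra|].
    apply (Rmult_le_reg_r z1); [lra|]. unfold Rdiv. rewrite Rmult_assoc, Rinv_l; lra. }
  assert (Hzk : forall k, z ^ k = z1 ^ k * rho ^ k)
    by (intros k; rewrite <- Rpow_mult_distr; f_equal; unfold rho; field; lra).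
  induction j as [|j IHj].
  - rewrite Nat.add_0_r. unfold pseries_sum. simpl sumk.
    rewrite sumk_zero by (intros i Hi; rewrite Hlow by exact Hi; ring).
    replace (0 + e m * z ^ m - e m * z ^ m) with 0 by ring. rewrite Rabs_R0. simpl. lra.
  - replace (S m + S j)%nat with (S (S m + j)) by lia.
    change (pseries_sum e z (S (S m + j)))
      with (pseries_sum e z (S m + j) + e (S m + j)%nat * z ^ (S m + j)).
    replace (pseries_sum e z (S m + j) + e (S m + j)%nat * z ^ (S m + j) - e m * z ^ m)
      with ((pseries_sum e z (S m + j) - e m * z ^ m) + e (S m + j)%nat * z ^ (S m + j)) by ring.
    eapply Rle_trans; [apply Rabs_triang|].
    assert (Hterm : Rabs (e (S m + j)%nat * z ^ (S m + j)) <= M * (rho ^ (S m) * (1 / 2) ^ j)).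
    { rewrite Hzk, <- Rmult_assoc, Rabs_mult, (Rabs_pos_eq (rho ^ _)) by (apply pow_le; lra).
      apply Rmult_le_compat; [apply Rabs_pos | apply pow_le; lra | apply HM|].
      rewrite pow_add. apply Rmult_le_compat_l; [apply pow_le; lra | apply pow_incr; lra]. }
    replace (2 * M * rho ^ S m * (1 - (1 / 2) ^ S j))
      with (2 * M * rho ^ S m * (1 - (1 / 2) ^ j) + M * (rho ^ S m * (1 / 2) ^ j))
      by (simpl; field).
    apply Rplus_le_compat; [exact IHj | exact Hterm].
Qed.

Lemma leading_term_bound (e : nat -> R) (M z1 z : R) (m : nat) :
  0 < z1 -> 0 < z <= z1 / 2 -> 0 <= M -> (forall k, Rabs (e k * z1 ^ k) <= M) ->
  (forall j, (j < m)%nat -> e j = 0) -> Un_cv (pseries_sum e z) 0 ->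
  Rabs (e m) * z1 ^ (S m) <= 2 * M * z.
Proof.
  intros Hz1 Hz HM0 HM Hlow Hcv.
  assert (Hbound : Rabs (e m * z ^ m) <= 2 * M * (z / z1) ^ (S m)).
  { apply Rnot_lt_le. intro Hc.
    destruct (Hcv (Rabs (e m * z ^ m) - 2 * M * (z / z1) ^ (S m)) ltac:(lra)) as [N HN].
    specialize (HN (S m + N)%nat ltac:(lia)). unfold R_dist in HN. rewrite Rminus_0_r in HN.
    pose proof (leading_term_tail e M z1 z m Hz1 Hz HM Hlow N) as Htail.
    assert (0 <= (1 / 2) ^ N) by (apply pow_le; lra).
    assert (0 <= 2 * M * (z / z1) ^ S m)
      by (pose proof (pow_le (z / z1) (S m) ltac:(apply Rdiv_le_0_compat; lra)); nra).
    pose proof (Rabs_triang (pseries_sum e z (S m + N) - e m * z ^ m)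
                            (- pseries_sum e z (S m + N))) as Tr.
    rewrite Rabs_Ropp in Tr.
    replace (pseries_sum e z (S m + N) - e m * z ^ m + - pseries_sum e z (S m + N))
      with (- (e m * z ^ m)) in Tr by ring.
    rewrite Rabs_Ropp in Tr. nra. }
  rewrite Rabs_mult, (Rabs_pos_eq (z ^ m)) in Hbound by (apply pow_le; lra).
  assert (Hzm : 0 < z ^ m) by (apply pow_lt; lra).
  assert (Hp : (z / z1) ^ (S m) * z1 ^ (S m) = z * z ^ m).
  { rewrite <- Rpow_mult_distr. replace (z / z1 * z1) with z by (field; lra). reflexivity. }
  apply (Rmult_le_compat_r (z1 ^ (S m))) in Hbound; [|left; apply pow_lt; lra].
  rewrite (Rmult_assoc (2 * M)), Hp in Hbound.
  apply (Rmult_le_reg_r (z ^ m)); [lra|]. simpl pow in *. lra.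
Qed.

Lemma le_small_multiple_zero (A K c : R) :
  0 <= A -> 0 <= K -> 0 < c -> (forall z, 0 < z <= c -> A <= K * z) -> A = 0.
Proof.
  intros HA HK Hc H. apply Rle_antisym; [|exact HA]. apply Rnot_lt_le. intro HApos.
  set (z := Rmin c (A / (2 * (K + 1)))).
  assert (Hz : 0 < z) by (apply Rmin_pos; [lra | apply Rdiv_lt_0_compat; lra]).
  assert (Hzle : z <= A / (2 * (K + 1))) by apply Rmin_r.
  specialize (H z (conj Hz (Rmin_l _ _))).
  assert (K * z <= K * (A / (2 * (K + 1)))) by (apply Rmult_le_compat_l; lra).
  assert (K * (A / (2 * (K + 1))) < A)
    by (apply (Rmult_lt_reg_r (2 * (K + 1))); [lra | field_simplify; nra]).
  lra.
Qed.

Lemma series_zero (e : nat -> R) (z0 : R) : 0 < z0 ->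
  (forall z, 0 < z < z0 -> Un_cv (pseries_sum e z) 0) -> forall k, e k = 0.
Proof.
  intros Hz0 H. set (z1 := z0 / 2).
  destruct (series_terms_bounded e z1 0 (H z1 ltac:(unfold z1; lra))) as [M [HM0 HM]].
  intros k. induction k as [m IH] using Wf_nat.lt_wf_ind.
  assert (Habs : Rabs (e m) * z1 ^ (S m) = 0).
  { apply (le_small_multiple_zero _ (2 * M) (z1 / 2)); [|lra|unfold z1; lra|].
    - apply Rmult_le_pos; [apply Rabs_pos | apply pow_le; unfold z1; lra].
    - intros z Hz. apply leading_term_bound; try (unfold z1; lra); auto.
      apply H. unfold z1 in *. lra. }
  apply Rmult_integral in Habs. destruct Habs as [Habs | Habs].
  - destruct (Req_dec (e m) 0) as [E|E]; [exact E|]. pose proof (Rabs_pos_lt _ E). lra.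
  - exfalso. pose proof (pow_lt z1 (S m) ltac:(unfold z1; lra)). lra.
Qed.

(** ** Grid values of [W_h] from its Laplace transform *)

Lemma segment_integral (g : R -> R) (c b A B : R) : 0 < b -> A < B ->
  (forall x, A < x < B -> g x = c * exp (- (b * x))) ->
  ex_RInt g A B /\ RInt g A B = c * (exp (- (b * A)) - exp (- (b * B))) / b.
Proof.
  intros Hb HAB Hg.
  set (F := fun x => - c * exp (- (b * x)) / b).
  assert (HI : is_RInt (fun x => c * exp (- (b * x))) A B (minus (F B) (F A))).
  { apply (is_RInt_derive (V := R_CompleteNormedModule) F (fun x => c * exp (- (b * x)))).
    - intros x _. unfold F. auto_derive; [auto | field; lra].
    - intros x _. apply continuity_pt_filterlim, derivable_continuous_pt. reg. }
  assert (Hext : forall x, Rmin A B < x < Rmax A B -> c * exp (- (b * x)) = g x).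
  { intros x Hx. rewrite Rmin_left, Rmax_right in Hx by lra. symmetry. apply Hg, Hx. }
  split.
  - eapply ex_RInt_ext; [exact Hext | eexists; exact HI].
  - rewrite <- (RInt_ext _ _ _ _ Hext), (is_RInt_unique _ _ _ _ HI).
    unfold F, minus, plus, opp. simpl. field. lra.
Qed.

Lemma exp_INR_pow (k : nat) (t : R) : exp (INR k * t) = exp t ^ k.
Proof.
  induction k as [|k IHk]; [simpl; rewrite Rmult_0_l, exp_0; reflexivity|].
  rewrite S_INR. replace ((INR k + 1) * t) with (INR k * t + t) by ring.
  rewrite exp_plus, IHk. simpl. ring.
Qed.

Lemma cv_const (c : R) : Un_cv (fun _ => c) c.
Proof. intros eps He. exists 0%nat. intros. unfold R_dist. rewrite Rminus_eq_0, Rabs_R0. lra. Qed.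

Definition solves_recursion (s2 mu q h : R) (u : nat -> R) : Prop :=
  u 0%nat = 1 / (h * lam_p s2 mu h) /\
  lam_p s2 mu h * u 1%nat = lam_tot s2 mu q h * u 0%nat /\
  forall k, lam_p s2 mu h * u (S (S k)) = lam_tot s2 mu q h * u (S k) - lam_m s2 mu h * u k.

Section LaplaceInversion.
Variables (s2 mu q h : R) (Wh : R -> R) (w : nat -> R).
Hypothesis Hh : 0 < h.
Hypothesis Hlp : 0 < lam_p s2 mu h.
Hypothesis Hlm : 0 <= lam_m s2 mu h.
Hypothesis Hq : 0 <= q.
Hypothesis Hstep : forall k x, INR k * h <= x < (INR k + 1) * h -> Wh x = w k.
Hypothesis Hlaplace : forall b, above_Phih s2 mu h q b ->
  laplace_is Wh b ((exp (b * h) - 1) / (b * h * (psih s2 mu h b - q))).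

Definition gen_denom (z : R) : R :=
  lam_p s2 mu h - lam_tot s2 mu q h * z + lam_m s2 mu h * z ^ 2.

Lemma psih_gen_denom (b : R) :
  psih s2 mu h b - q = gen_denom (exp (- (b * h))) / exp (- (b * h)).
Proof.
  pose proof (exp_pos (- (b * h))). rewrite psih_lambda by exact Hh.
  replace (exp (b * h)) with (/ exp (- (b * h))) by (rewrite exp_Ropp, Rinv_inv; reflexivity).
  unfold gen_denom, lam_tot. field. lra.
Qed.

Lemma gen_denom_nz (b : R) : above_Phih s2 mu h q b -> gen_denom (exp (- (b * h))) <> 0.
Proof.
  intros [Hb Hroot] E. pose proof (Rlt_irrefl b) as Hirr. apply Hirr, Hroot; [lra|].
  apply Rminus_diag_uniq. rewrite psih_gen_denom, E. unfold Rdiv. ring.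
Qed.

Lemma partial_laplace_integral (b : R) (n : nat) : 0 < b ->
  ex_RInt (fun x => exp (- (b * x)) * Wh x) 0 (INR n * h) /\
  RInt (fun x => exp (- (b * x)) * Wh x) 0 (INR n * h)
  = pseries_sum w (exp (- (b * h))) n * ((1 - exp (- (b * h))) / b).
Proof.
  intros Hb. induction n as [|n [IH1 IH2]].
  - simpl. rewrite Rmult_0_l, RInt_point. split; [apply ex_RInt_point|].
    unfold pseries_sum; simpl. rewrite Rmult_0_l. reflexivity.
  - destruct (segment_integral (fun x => exp (- (b * x)) * Wh x) (w n) b
                (INR n * h) (INR n * h + h) Hb ltac:(lra)) as [S1 S2].
    { intros x Hx. rewrite (Hstep n x) by lra. ring. }
    replace (INR (S n) * h) with (INR n * h + h) by (rewrite S_INR; ring).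
    split; [eapply ex_RInt_Chasles; eauto|].
    rewrite <- (RInt_Chasles _ _ _ _ IH1 S1), IH2, S2.
    unfold plus. simpl. unfold pseries_sum. simpl sumk.
    replace (- (b * (INR n * h))) with (INR n * (- (b * h))) by ring.
    replace (- (b * (INR n * h + h))) with (INR n * (- (b * h)) + (- (b * h))) by ring.
    rewrite exp_plus, exp_INR_pow. field. lra.
Qed.

Lemma generating_function (b : R) : above_Phih s2 mu h q b ->
  Un_cv (pseries_sum w (exp (- (b * h)))) (1 / (h * gen_denom (exp (- (b * h))))).
Proof.
  intros Hab. pose proof (gen_denom_nz b Hab) as Hnz. destruct (Hlaplace b Hab) as [Hint Hlim].
  destruct Hab as [Hb _].
  set (z := exp (- (b * h))) in *.
  assert (Hz : 0 < z < 1)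
    by (split; [apply exp_pos | unfold z; rewrite <- exp_0; apply exp_increasing; nra]).
  set (L := (exp (b * h) - 1) / (b * h * (psih s2 mu h b - q))).
  assert (HL : L * (b / (1 - z)) = 1 / (h * gen_denom z)).
  { unfold L. rewrite psih_gen_denom. fold z.
    replace (exp (b * h)) with (/ z) by (unfold z; rewrite exp_Ropp, Rinv_inv; reflexivity).
    field. repeat split; lra. }
  rewrite <- HL. intros eps He.
  assert (Hscale : 0 < (1 - z) / b) by (apply Rdiv_lt_0_compat; lra).
  destruct (Hlim (eps * ((1 - z) / b)) ltac:(nra)) as [M HM].
  destruct (INR_unbounded (M / h)) as [N HN].
  exists N. intros n Hn.
  assert (HT : M <= INR n * h).
  { apply le_INR in Hn. apply (Rmult_lt_compat_r h) in HN; [|lra].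
    unfold Rdiv in HN. rewrite Rmult_assoc, Rinv_l, Rmult_1_r in HN by lra. nra. }
  assert (HT0 : 0 <= INR n * h) by (pose proof (pos_INR n); nra).
  destruct (Hint _ HT0) as [pr]. specialize (HM _ pr HT).
  rewrite <- RInt_Reals in HM. destruct (partial_laplace_integral b n Hb) as [_ Hr].
  rewrite Hr in HM. fold z in HM. unfold R_dist.
  replace (pseries_sum w z n - L * (b / (1 - z)))
    with ((pseries_sum w z n * ((1 - z) / b) - L) / ((1 - z) / b)) by (field; lra).
  unfold Rdiv at 1. rewrite Rabs_mult, Rabs_inv, (Rabs_pos_eq ((1 - z) / b)) by lra.
  apply (Rmult_lt_reg_r ((1 - z) / b)); [exact Hscale|].
  rewrite Rmult_assoc, Rinv_l, Rmult_1_r by lra. exact HM.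
Qed.

Lemma small_z_above_roots : exists z0, 0 < z0 /\ forall z, 0 < z < z0 ->
  above_Phih s2 mu h q (- ln z / h) /\ exp (- ((- ln z / h) * h)) = z.
Proof.
  set (K := (q + lam_m s2 mu h) / lam_p s2 mu h).
  assert (HK : 0 <= K) by (apply Rdiv_le_0_compat; lra).
  set (b0 := ln (1 + K) / h + 1).
  assert (Hln : 0 <= ln (1 + K)) by (rewrite <- ln_1; apply Rcomplements.ln_le; lra).
  exists (exp (- (b0 * h))). split; [apply exp_pos|].
  intros z Hz.
  assert (Hez : exp (- ((- ln z / h) * h)) = z)
    by (replace (- ((- ln z / h) * h)) with (ln z) by (field; lra); apply exp_ln; lra).
  split; [|exact Hez].
  assert (Hbz : b0 < - ln z / h).
  { assert (ln z < - (b0 * h)) by (rewrite <- (ln_exp (- (b0 * h))); apply ln_increasing; lra).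
    apply (Rmult_lt_reg_r h); [lra|]. unfold Rdiv. rewrite Rmult_assoc, Rinv_l by lra. lra. }
  split; [unfold b0 in Hbz; pose proof (Rdiv_le_0_compat _ h Hln Hh); lra|].
  intros r Hr Hpr. rewrite psih_lambda in Hpr by exact Hh.
  pose proof (exp_pos (- (r * h))).
  assert (Hle : exp (r * h) <= 1 + K).
  { unfold K. apply (Rmult_le_reg_l (lam_p s2 mu h)); [lra|]. field_simplify; [|lra]. nra. }
  assert (r * h <= ln (1 + K)) by (rewrite <- (ln_exp (r * h)); apply Rcomplements.ln_le;
                                   [apply exp_pos | exact Hle]).
  assert (r < b0).
  { unfold b0. apply (Rmult_lt_reg_r h); [lra|]. unfold Rdiv.
    replace ((ln (1 + K) * / h + 1) * h) with (ln (1 + K) + h) by (field; lra). lra. }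
  lra.
Qed.

(** Coefficients of [gen_denom z * sum_k w k z^k - 1/h]; they all vanish
    exactly when the [w k] solve the recursion. *)
Definition recursion_defect (k : nat) : R :=
  match k with
  | 0%nat => lam_p s2 mu h * w 0 - 1 / h
  | 1%nat => lam_p s2 mu h * w 1 - lam_tot s2 mu q h * w 0
  | S (S j as k1) => lam_p s2 mu h * w (S k1) - lam_tot s2 mu q h * w k1 + lam_m s2 mu h * w j
  end.

Lemma recursion_defect_sum (z : R) (n : nat) :
  pseries_sum recursion_defect z (S (S n)) =
  lam_p s2 mu h * pseries_sum w z (S (S n)) - lam_tot s2 mu q h * z * pseries_sum w z (S n)
  + lam_m s2 mu h * z ^ 2 * pseries_sum w z n - 1 / h.
Proof.
  unfold pseries_sum. induction n as [|n IHn]; [simpl; ring|].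
  change (sumk (fun k => recursion_defect k * z ^ k) (S (S (S n))))
    with (sumk (fun k => recursion_defect k * z ^ k) (S (S n))
          + recursion_defect (S (S n)) * z ^ (S (S n))).
  rewrite IHn. simpl. ring.
Qed.

(** By [generating_function] the defect series sums to [0] for all small [z],
    so [series_zero] applies. *)
Lemma recursion_defect_zero (k : nat) : recursion_defect k = 0.
Proof.
  destruct small_z_above_roots as [z0 [Hz0 Hreg]].
  apply (series_zero recursion_defect z0 Hz0). clear k. intros z Hz.
  destruct (Hreg z Hz) as [Hab Hez].
  pose proof (generating_function _ Hab) as Hcv. pose proof (gen_denom_nz _ Hab) as Hnz.
  rewrite Hez in Hcv, Hnz. set (l := 1 / (h * gen_denom z)) in *.
  apply (CV_shift _ 2).
  apply (Un_cv_ext (fun n =>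
      lam_p s2 mu h * pseries_sum w z (S (S n)) - lam_tot s2 mu q h * z * pseries_sum w z (S n)
      + lam_m s2 mu h * z ^ 2 * pseries_sum w z n - 1 / h)).
  { intros n. rewrite Nat.add_comm. symmetry. apply recursion_defect_sum. }
  replace 0 with (lam_p s2 mu h * l - lam_tot s2 mu q h * z * l + lam_m s2 mu h * z ^ 2 * l - 1 / h)
    by (unfold l, gen_denom in *; field; split; [lra | exact Hnz]).
  pose proof (CV_shift' _ 1 _ Hcv) as Hcv1. pose proof (CV_shift' _ 2 _ Hcv) as Hcv2.
  apply CV_minus; [|apply cv_const].
  apply CV_plus; [apply CV_minus|]; apply CV_mult; try apply cv_const.
  - apply (Un_cv_ext _ _ (fun n => f_equal _ (Nat.add_comm n 2)) _ Hcv2).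
  - apply (Un_cv_ext _ _ (fun n => f_equal _ (Nat.add_comm n 1)) _ Hcv1).
  - exact Hcv.
Qed.

Lemma grid_values_unique (u : nat -> R) : solves_recursion s2 mu q h u -> forall k, w k = u k.
Proof.
  intros [H0 [H1 H2]].
  assert (E0 : w 0%nat = u 0%nat).
  { pose proof (recursion_defect_zero 0) as D0. simpl in D0. rewrite H0.
    apply (Rmult_eq_reg_l (lam_p s2 mu h)); [|lra].
    replace (lam_p s2 mu h * (1 / (h * lam_p s2 mu h))) with (1 / h) by (field; lra). lra. }
  assert (E1 : w 1%nat = u 1%nat).
  { pose proof (recursion_defect_zero 1) as D1. simpl in D1.
    apply (Rmult_eq_reg_l (lam_p s2 mu h)); [|lra]. rewrite H1, <- E0. lra. }
  assert (Hpair : forall k, w k = u k /\ w (S k) = u (S k)).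
  { induction k as [|k [A B]]; [split; assumption|]. split; [exact B|].
    pose proof (recursion_defect_zero (S (S k))) as Dk. simpl in Dk.
    apply (Rmult_eq_reg_l (lam_p s2 mu h)); [|lra]. rewrite H2, <- A, <- B. lra. }
  intros k. apply Hpair.
Qed.

End LaplaceInversion.

(** Under [hstar_ok] the up-jump intensity is strictly positive: its
    nonnegativity at a larger mesh forces [s2 + mu h > 0]. *)
Lemma lam_p_pos (s2 mu hstar h : R) : hstar_ok s2 mu hstar -> 0 < s2 -> 0 < h < hstar ->
  0 < lam_p s2 mu h.
Proof.
  intros Hok Hs2 Hh. set (h' := (h + hstar) / 2).
  destruct (Hok h' ltac:(unfold h'; lra)) as [Hh' _].
  assert (Hform : forall t, 0 < t -> s2 / (2 * t ^ 2) + mu / (2 * t) = (s2 + mu * t) / (2 * t ^ 2))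
    by (intros t Ht; field; lra).
  rewrite Hform in Hh' by (unfold h'; lra). unfold lam_p. rewrite Hform by lra.
  assert (0 <= s2 + mu * h').
  { apply Rmult_le_reg_r with (r := / (2 * h' ^ 2)); [apply Rinv_0_lt_compat|]; 
      [pose proof (pow_lt h' 2 ltac:(unfold h'; lra)); lra | lra]. }
  apply Rdiv_lt_0_compat; [|pose proof (pow_lt h 2); lra].
  destruct (Rle_lt_dec 0 mu); [nra|]. assert (h < h') by (unfold h'; lra). nra.
Qed.

Lemma Wh_grid (s2 mu q h : R) (Wh : R -> R) (u : nat -> R) : 0 <= q -> 0 < h ->
  0 < lam_p s2 mu h -> 0 <= lam_m s2 mu h -> is_Wh s2 mu q h Wh ->
  solves_recursion s2 mu q h u -> forall k, Wh (INR (S k) * h - h) = u k.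
Proof.
  intros Hq Hh Hlp Hlm [_ [[w Hstep] [_ HL]]] Hu k.
  rewrite <- (grid_values_unique s2 mu q h Wh w Hh Hlp Hlm Hq Hstep HL u Hu k).
  apply Hstep. rewrite S_INR. split; nra.
Qed.

Lemma linear_solution (s2 h : R) : 0 < s2 -> 0 < h ->
  solves_recursion s2 0 0 h (fun j => 2 * h * (INR j + 1) / s2).
Proof.
  intros Hs2 Hh. unfold solves_recursion, lam_tot, lam_p, lam_m.
  repeat split; [simpl; field; lra | simpl; field; lra|].
  intros j. rewrite !S_INR. field. lra.
Qed.

Lemma DeltaW_driftless (s2 h : R) (Wh : R -> R) (k : nat) : 0 < s2 -> 0 < h ->
  0 < lam_p s2 0 h -> 0 <= lam_m s2 0 h -> is_Wh s2 0 0 h Wh ->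
  DeltaW s2 0 0 Wh (INR (S k) * h) h = 0.
Proof.
  intros Hs2 Hh Hlp Hlm HW.
  unfold DeltaW. rewrite (Wh_grid s2 0 0 h Wh _ (Rle_refl 0) Hh Hlp Hlm HW
                            (linear_solution s2 h Hs2 Hh) k).
  pose proof (pos_INR (S k)). unfold W.
  destruct (Rlt_dec (INR (S k) * h) 0) as [Hn|_]; [nra|].
  rewrite Rabs_R0, Rmax_left by lra.
  destruct (Rlt_dec 0 0) as [Hn|_]; [lra|].
  rewrite S_INR. field. lra.
Qed.

Lemma root_power_solution (s2 mu q h r1 r2 c : R) : c <> 0 ->
  char_poly s2 mu q h r1 = 0 -> char_poly s2 mu q h r2 = 0 ->
  (r1 - r2) / c = 1 / (h * lam_p s2 mu h) ->
  solves_recursion s2 mu q h (fun j => (r1 ^ S j - r2 ^ S j) / c).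
Proof.
  unfold char_poly, solves_recursion. intros Hc C1 C2 H0.
  set (lp := lam_p s2 mu h) in *. set (lt := lam_tot s2 mu q h) in *. set (lm := lam_m s2 mu h) in *.
  repeat split.
  - simpl. rewrite !Rmult_1_r. exact H0.
  - replace (lp * ((r1 ^ 2 - r2 ^ 2) / c)) with ((lp * r1 ^ 2 - lp * r2 ^ 2) / c) by (field; exact Hc).
    replace (lp * r1 ^ 2) with (lt * r1 - lm) by lra. replace (lp * r2 ^ 2) with (lt * r2 - lm) by lra.
    simpl. field. exact Hc.
  - intros j.
    replace (lp * ((r1 ^ S (S (S j)) - r2 ^ S (S (S j))) / c))
      with ((r1 ^ S j * (lp * r1 ^ 2) - r2 ^ S j * (lp * r2 ^ 2)) / c) by (simpl; field; exact Hc).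
    replace (lp * r1 ^ 2) with (lt * r1 - lm) by lra. replace (lp * r2 ^ 2) with (lt * r2 - lm) by lra.
    simpl. field. exact Hc.
Qed.

Lemma DeltaW_closed_form (s2 mu q h : R) (Wh : R -> R) (k : nat) :
  0 < s2 -> 0 <= q -> 0 < Rmax q (Rabs mu) -> 0 < h < h1 s2 mu q ->
  0 < lam_p s2 mu h -> 0 <= lam_m s2 mu h -> is_Wh s2 mu q h Wh ->
  DeltaW s2 mu q Wh (INR (S k) * h) h = Gf s2 mu q (INR (S k) * h) h.
Proof.
  intros Hs2 Hq Hpos Hh Hlp Hlm HW.
  destruct (small_mesh s2 mu q Hs2 Hq Hpos h Hh) as [_ [HM _]].
  pose proof (Eh_pos s2 mu q Hs2 Hq Hpos h) as HE.
  assert (Hsol : solves_recursion s2 mu q h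
                   (fun j => (r1 s2 mu q h ^ S j - r2 s2 mu q h ^ S j) / Eh s2 mu q h)).
  { apply root_power_solution; [lra | apply char_poly_r1 | apply char_poly_r2 | ]; auto.
    unfold r1, r2, N1, N2, lam_p. unfold Mh in *. field. repeat split; lra. }
  unfold DeltaW. rewrite (Wh_grid s2 mu q h Wh _ Hq ltac:(lra) Hlp Hlm HW Hsol k).
  pose proof (pos_INR (S k)). unfold W, Gf.
  destruct (Rlt_dec (INR (S k) * h) 0) as [Hn|_]; [nra|].
  destruct (Rlt_dec 0 (Rmax q (Rabs mu))) as [_|Hn]; [|lra].
  assert (Hpow : forall r, 0 < r -> exp (ln r / h * (INR (S k) * h)) = r ^ S k).
  { intros r Hr. replace (ln r / h * (INR (S k) * h)) with (INR (S k) * ln r) by (field; lra).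
    rewrite exp_INR_pow, exp_ln by exact Hr. reflexivity. }
  unfold Phi1, Phi2. rewrite !Hpow by (apply r1_pos || apply r2_pos; auto). reflexivity.
Qed.

Lemma Zhpp_succ (h x : R) : Zhpp h x -> exists k, x = INR (S k) * h.
Proof. intros [[|k] [Hk ->]]; [lia | exists k; reflexivity]. Qed.

Lemma nested_grid (hn : nat -> R) (x : R) (N : nat) :
  (forall n, 0 < hn n) -> (forall n, exists m : nat, hn n = INR m * hn (S n)) ->
  Zhpp (hn N) x -> forall j, exists k, x = INR (S k) * hn (N + j)%nat.
Proof.
  intros Hpos Hnest Hx j. induction j as [|j [k Hk]].
  - rewrite Nat.add_0_r. apply Zhpp_succ, Hx.
  - destruct (Hnest (N + j)%nat) as [[|m] Hm].
    { pose proof (Hpos (N + j)%nat). simpl in Hm. lra. }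
    exists (Nat.pred (S k * S m)). rewrite Nat.succ_pred_pos by lia.
    rewrite mult_INR, Nat.add_succ_r, Hk, Hm. ring.
Qed.

Lemma Un_cv_eventually_ext (u v : nat -> R) (l : R) :
  (exists N, forall n, (n >= N)%nat -> u n = v n) -> Un_cv v l -> Un_cv u l.
Proof.
  intros [N HN] Hv eps He. destruct (Hv eps He) as [N2 HN2].
  exists (max N N2). intros n Hn. rewrite HN by lia. apply HN2. lia.
Qed.

Section NonDegenerate.
Variables (s2 mu q hstar : R) (Whf : R -> R -> R).
Hypothesis Hs2 : 0 < s2.
Hypothesis Hq : 0 <= q.
Hypothesis Hhs : 0 < hstar.
Hypothesis Hok : hstar_ok s2 mu hstar.
Hypothesis HW : forall h, 0 < h < hstar -> is_Wh s2 mu q h (Whf h).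
Hypothesis Hpos : 0 < Rmax q (Rabs mu).

Lemma DeltaW_grid (h : R) (k : nat) : 0 < h < Rmin (h1 s2 mu q) hstar ->
  DeltaW s2 mu q (Whf h) (INR (S k) * h) h = Gf s2 mu q (INR (S k) * h) h.
Proof.
  intros Hh. pose proof (Rmin_l (h1 s2 mu q) hstar). pose proof (Rmin_r (h1 s2 mu q) hstar).
  apply DeltaW_closed_form; auto; try lra;
    [apply (lam_p_pos _ _ hstar); auto; lra | apply (Hok h); lra | apply HW; lra].
Qed.

Lemma DeltaW_uniform_bound : exists A0 h0, 0 < A0 /\ 0 < h0 /\
  forall h x, 0 < h < h0 -> Zhpp h x -> x * h ^ 2 <= 1 ->
    Rabs (DeltaW s2 mu q (Whf h) x h) <= A0 * h ^ 2 * (1 + x) * exp (alpha_p s2 mu q * x).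
Proof.
  destruct (Gf_bound s2 mu q Hs2 Hq Hpos) as [A0 [h0 [HA0 [Hh0 [Hh01 HB]]]]].
  exists A0, (Rmin h0 hstar). split; [exact HA0|]. split; [apply Rmin_pos; lra|].
  intros h x Hh Hx Hxh. destruct (Zhpp_succ h x Hx) as [k ->].
  pose proof (Rmin_l h0 hstar); pose proof (Rmin_r h0 hstar).
  assert (Hmin : h < Rmin (h1 s2 mu q) hstar) by (apply Rmin_glb_lt; lra).
  rewrite DeltaW_grid by lra.
  apply HB; [lra | pose proof (pos_INR (S k)); nra | exact Hxh].
Qed.

Lemma DeltaW_second_order_limit (hn : nat -> R) (x : R) :
  (forall n, 0 < hn n) -> (forall n, exists m : nat, hn n = INR m * hn (S n)) ->
  Un_cv hn 0 -> (exists N, Zhpp (hn N) x) ->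
  Un_cv (fun n => DeltaW s2 mu q (Whf (hn n)) x (hn n) / (hn n) ^ 2) (delta_limit s2 mu q x).
Proof.
  intros Hhn Hnest Hcv [N HN].
  assert (Hx0 : 0 <= x)
    by (destruct (Zhpp_succ _ _ HN) as [k ->]; pose proof (pos_INR (S k)); pose proof (Hhn N); nra).
  apply (Un_cv_eventually_ext _ (fun n => Gf s2 mu q x (hn n) / (hn n) ^ 2)).
  - destruct (Hcv (Rmin (h1 s2 mu q) hstar)) as [N2 HN2];
      [apply Rmin_pos; [apply h1_pos | ]; auto|].
    exists (max N N2). intros n Hn.
    specialize (HN2 n ltac:(lia)). unfold R_dist in HN2.
    rewrite Rminus_0_r, Rabs_pos_eq in HN2 by (left; apply Hhn).
    destruct (nested_grid hn x N Hhn Hnest HN (n - N)) as [k Hk].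
    replace (N + (n - N))%nat with n in Hk by lia.
    pose proof (Hhn n). rewrite Hk, DeltaW_grid by lra. reflexivity.
  - apply (lim_seq (fun h => Gf s2 mu q x h / h ^ 2)); auto. apply Gf_lim; auto.
Qed.

End NonDegenerate.

(** For [q = 0] one root is [0] and the other [-2 mu / s2]. *)
Lemma delta_limit_q0 (s2 mu x : R) : 0 < s2 -> 0 < Rmax 0 (Rabs mu) ->
  delta_limit s2 mu 0 x = - (2 / 3) * (mu ^ 2 * x / s2 ^ 3) * exp (- (2 * mu * x / s2)).
Proof.
  intros Hs2 Hpos.
  assert (Hmu : mu <> 0) by (intro E; subst; rewrite Rabs_R0, Rmax_left in Hpos; lra).
  assert (HD : disc s2 mu 0 = Rabs mu).
  { unfold disc. rewrite <- sqrt_Rsqr_abs. f_equal. unfold Rsqr. ring. }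
  unfold delta_limit, theta_p, theta_m, alpha_p, alpha_m. rewrite HD.
  destruct (Rcase_abs mu) as [Hn|Hp].
  - rewrite Rabs_left by lra.
    replace ((- mu + - mu) / s2 * x) with (- (2 * mu * x / s2)) by (field; lra).
    replace ((- mu - - mu) / s2 * x) with 0 by (field; lra). rewrite exp_0. field. lra.
  - rewrite Rabs_right by lra.
    replace ((- mu - mu) / s2 * x) with (- (2 * mu * x / s2)) by (field; lra).
    replace ((- mu + mu) / s2 * x) with 0 by (field; lra). rewrite exp_0. field. lra.
Qed.

Theorem proposition5p5 (sigma2 mu q hstar : R) (Whf : R -> R -> R) :
  0 < sigma2 -> 0 <= q -> 0 < hstar -> hstar_ok sigma2 mu hstar ->
  (forall h, 0 < h < hstar -> is_Wh sigma2 mu q h (Whf h)) ->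
  ((q = 0 /\ mu = 0) ->
     forall h x, 0 < h < hstar -> Zhpp h x -> DeltaW sigma2 mu q (Whf h) x h = 0) /\
  (0 < Rmax q (Rabs mu) ->
     (exists A0 h0, 0 < A0 /\ 0 < h0 /\
        forall h x, 0 < h < h0 -> Zhpp h x -> x * h ^ 2 <= 1 ->
          Rabs (DeltaW sigma2 mu q (Whf h) x h)
            <= A0 * h ^ 2 * (1 + x) * exp (alpha_p sigma2 mu q * x)) /\
     (forall (hn : nat -> R) x,
        (forall n, 0 < hn n) ->
        (forall n, exists m : nat, hn n = INR m * hn (S n)) ->
        Un_decreasing hn -> Un_cv hn 0 ->
        (exists N, Zhpp (hn N) x) ->
        Un_cv (fun n => DeltaW sigma2 mu q (Whf (hn n)) x (hn n) / (hn n) ^ 2)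
              (delta_limit sigma2 mu q x)) /\
     (forall x, q = 0 ->
        delta_limit sigma2 mu q x
        = - (2 / 3) * (mu ^ 2 * x / sigma2 ^ 3) * exp (- (2 * mu * x / sigma2)))).
Proof.
  intros Hs2 Hq Hhs Hok HW. split.
  - intros [-> ->] h x Hh Hx. destruct (Zhpp_succ h x Hx) as [k ->].
    apply DeltaW_driftless;
      [exact Hs2 | lra | exact (lam_p_pos _ _ _ h Hok Hs2 Hh) | apply (Hok h Hh) | apply HW, Hh].
  - intros Hpos. split; [|split].
    + apply (DeltaW_uniform_bound _ _ _ hstar); assumption.
    + intros hn x Hhn Hnest _ Hcv HN. apply (DeltaW_second_order_limit _ _ _ hstar); assumption.
    + intros x ->. apply delta_limit_q0; assumption.
Qed.
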